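(* There is $c\in(0,1)$ (depending on $d,\gamma,\chi$) such that for all $N$ $$cN^{d-1-\gamma}\le\mathrm{cap}_\Delta(B)\le c^{-1}N^{d-1-\gamma},$$ and for every $x\in\partial B$, $$cN^{1-d}\le\bar e_B^\Delta(x)\le c^{-1}N^{1-d}.$$
   Context: Let $d\ge3$, $\gamma\in(\frac1{d-1},1)$, $\chi\in(0,\frac14)$. Identify $\mathbb T_N^d$ with $\{0,\dots,N-1\}^d\subset\mathbb Z^d$, both with nearest-neighbour graph structure. $B(x,r)$ is the Euclidean ball of radius $r$ centred at $x$. Let $L=2N^\gamma+\chi N$, $B=B_N=\bigcup_{x\in[L,N-L]^d\cap\mathbb Z^d}B(x,\chi N)$ and $\Delta=\Delta_N=\big(\bigcup_{x\in B}B(x,N^\gamma)\big)^c$, both viewed as subsets of $\mathbb T_N^d$. For $K$, the inner boundary is $\partial K=\{x\in K:\exists y\notin K,|x-y|=1\}$. $P_x$ is the law of simple random walk on $\mathbb T_N^d$ started at $x$; $H_K=\inf\{k\ge0:X_k\in K\}$, $\tilde H_K=\inf\{k\ge1:X_k\in K\}$. Define $\mathrm{cap}_\Delta(B)=\sum_{x\in\partial B}P_x[\tilde H_B>H_\Delta]$ and $\bar e^\Delta_B(x)=\mathbf 1_{x\in\partial B}P_x[\tilde H_B>H_\Delta]/\mathrm{cap}_\Delta(B)$. *)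

From Stdlib Require Import Reals List ZArith ClassicalEpsilon.
Import ListNotations.
Open Scope R_scope.

(* Points of Z^d (and of T_N^d) are lists of integers of length d. *)
Definition coord (x : list Z) (i : nat) : Z := nth i x 0%Z.

(* Torus T_N^d identified with {0,...,N-1}^d: list of all its points. *)
Fixpoint grid (d N : nat) : list (list Z) :=
  match d with
  | O => [[]]
  | S k => flat_map (fun a => map (cons a) (grid k N))
                    (map Z.of_nat (seq 0 N))
  end.

Definition is_torus_pt (d N : nat) (x : list Z) : Prop := In x (grid d N).

Fixpoint replace_nth (i : nat) (v : Z) (x : list Z) : list Z :=
  match i, x with
  | O, _ :: t => v :: t
  | S j, a :: t => a :: replace_nth j v t
  | _, [] => []
  end.

(* The 2d nearest-neighbour steps on the torus (with multiplicity). *)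
Definition torus_nbrs (d N : nat) (x : list Z) : list (list Z) :=
  flat_map (fun i =>
     map (fun s => replace_nth i (Z.modulo (coord x i + s) (Z.of_nat N)) x)
         [1%Z; (-1)%Z]) (seq 0 d).

Definition Rsum_list {A} (f : A -> R) (l : list A) : R :=
  fold_right (fun a acc => f a + acc) 0 l.

Definition euclid (d : nat) (x y : list Z) : R :=
  sqrt (Rsum_list (fun i => (IZR (coord x i - coord y i)) ^ 2) (seq 0 d)).

Definition in_ball (d : nat) (x : list Z) (r : R) (y : list Z) : Prop :=
  euclid d x y <= r.

Definition Lpar (N : nat) (gam chi : R) : R :=
  2 * Rpower (INR N) gam + chi * INR N.

Definition inB (d N : nat) (gam chi : R) (y : list Z) : Prop :=
  is_torus_pt d N y /\
  exists x : list Z, length x = d /\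
    (forall i, (i < d)%nat ->
       Lpar N gam chi <= IZR (coord x i) <= INR N - Lpar N gam chi) /\
    in_ball d x (chi * INR N) y.

Definition inDelta (d N : nat) (gam chi : R) (y : list Z) : Prop :=
  is_torus_pt d N y /\
  ~ (exists x, inB d N gam chi x /\ in_ball d x (Rpower (INR N) gam) y).

Definition inBdB (d N : nat) (gam chi : R) (x : list Z) : Prop :=
  inB d N gam chi x /\
  exists y, In y (torus_nbrs d N x) /\ ~ inB d N gam chi y.

Definition ind (P : Prop) : R :=
  if excluded_middle_informative P then 1 else 0.

(* q n y = P_y[ exists k <= n, X_k in Delta and X_j notin B for 1 <= j <= k ]
   for simple random walk on T_N^d.  Its increasing limit in n is
   P_y[ tilde H_B > H_Delta ]. *)
Fixpoint esc_approx (d N : nat) (gam chi : R) (n : nat) (y : list Z) : R :=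
  if excluded_middle_informative (inDelta d N gam chi y) then 1 else
  match n with
  | O => 0
  | S m => / (2 * INR d) *
           Rsum_list (fun z => (1 - ind (inB d N gam chi z)) *
                               esc_approx d N gam chi m z)
                     (torus_nbrs d N y)
  end.

(* cap_Delta(B) = sum over x in dB of P_x[tilde H_B > H_Delta], where
   h x = P_x[tilde H_B > H_Delta]. *)
Definition capD (d N : nat) (gam chi : R) (h : list Z -> R) : R :=
  Rsum_list (fun x => ind (inBdB d N gam chi x) * h x) (grid d N).

Definition ebarD (d N : nat) (gam chi : R) (h : list Z -> R) (x : list Z) : R :=
  ind (inBdB d N gam chi x) * h x / capD d N gam chi h.

(* The capacity is the sum of the escape probability [h] over the inner boundary of [B], so
   both statements follow from two estimates. [B] is the set of torus points within distance
   [r = chi N] of an integer box of side about [N/2], hence its inner boundary has between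
   [(N/4)^(d-1)] and [2 d N^(d-1)] points. On that boundary [h] is of order [N^-gam].
   From below: one or two steps outwards reach a point above the supporting hyperplane of [B],
   where the discrete harmonic affine function (height above the hyperplane) / (N^gam + 1)
   bounds [h] from below by the minimum principle. From above: [h] is dominated by a radial
   supersolution [a u - b u^2] of the distance [u] beyond [B]; it reaches [1] before [Delta],
   since every point of [Delta] lies about [N^gam] beyond [B], and its slope is [a ~ 2 N^-gam].
   Hence [cap ~ N^(d-1) N^-gam] and [ebar = h / cap ~ N^(1-d)]. *)

From Stdlib Require Import Reals List ZArith Lra Lia Psatz ClassicalEpsilon Classical.
Import ListNotations.
Open Scope R_scope.

(** * Finite sums and indicators *)

Lemma Rsum_nil {A} (f : A -> R) : Rsum_list f [] = 0.
Proof. reflexivity. Qed.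

Lemma Rsum_cons {A} (f : A -> R) a l : Rsum_list f (a :: l) = f a + Rsum_list f l.
Proof. reflexivity. Qed.

Lemma Rsum_app {A} (f : A -> R) l1 l2 :
  Rsum_list f (l1 ++ l2) = Rsum_list f l1 + Rsum_list f l2.
Proof. induction l1 as [|a l1 IH]; [simpl; lra|]. rewrite <- app_comm_cons, !Rsum_cons, IH. lra. Qed.

Lemma Rsum_ext_in {A} (f g : A -> R) l :
  (forall a, In a l -> f a = g a) -> Rsum_list f l = Rsum_list g l.
Proof.
  induction l as [|a l IH]; intros H; [reflexivity|]. rewrite !Rsum_cons, H, IH; auto.
  - intros; apply H; right; auto.
  - left; auto.
Qed.

Lemma Rsum_le_in {A} (f g : A -> R) l :
  (forall a, In a l -> f a <= g a) -> Rsum_list f l <= Rsum_list g l.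
Proof.
  induction l as [|a l IH]; intros H; [rewrite !Rsum_nil; lra|]. rewrite !Rsum_cons.
  apply Rplus_le_compat; [apply H; left; auto | apply IH; intros; apply H; right; auto].
Qed.

Lemma Rsum_lt_in {A} (f g : A -> R) l : l <> [] ->
  (forall a, In a l -> f a < g a) -> Rsum_list f l < Rsum_list g l.
Proof.
  induction l as [|a l IH]; intros Hne H; [congruence|]. rewrite !Rsum_cons.
  specialize (H a (or_introl eq_refl)) as Ha. destruct l as [|b l].
  - rewrite !Rsum_nil. lra.
  - assert (Rsum_list f (b :: l) < Rsum_list g (b :: l)); [|lra].
    apply IH; [discriminate|]. intros; apply H; right; auto.
Qed.

Lemma Rsum_plus {A} (f g : A -> R) l :
  Rsum_list (fun a => f a + g a) l = Rsum_list f l + Rsum_list g l.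
Proof. induction l; [rewrite !Rsum_nil; lra|]. rewrite !Rsum_cons, IHl. lra. Qed.

Lemma Rsum_minus {A} (f g : A -> R) l :
  Rsum_list (fun a => f a - g a) l = Rsum_list f l - Rsum_list g l.
Proof. induction l; [rewrite !Rsum_nil; lra|]. rewrite !Rsum_cons, IHl. lra. Qed.

Lemma Rsum_scal {A} (c : R) (f : A -> R) l :
  Rsum_list (fun a => c * f a) l = c * Rsum_list f l.
Proof. induction l; [rewrite !Rsum_nil; lra|]. rewrite !Rsum_cons, IHl. lra. Qed.

Lemma Rsum_const {A} (c : R) (l : list A) :
  Rsum_list (fun _ => c) l = INR (length l) * c.
Proof.
  induction l; [rewrite Rsum_nil; simpl; lra|]. rewrite Rsum_cons, IHl.
  simpl length. rewrite S_INR. lra.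
Qed.

Lemma Rsum_nonneg {A} (f : A -> R) l :
  (forall a, In a l -> 0 <= f a) -> 0 <= Rsum_list f l.
Proof.
  intros H. replace 0 with (INR (length l) * 0) by ring.
  rewrite <- Rsum_const. apply Rsum_le_in; auto.
Qed.

Lemma Rsum_map {A B} (f : B -> R) (g : A -> B) l :
  Rsum_list f (map g l) = Rsum_list (fun a => f (g a)) l.
Proof. induction l; [reflexivity|]. simpl map. rewrite !Rsum_cons, IHl. reflexivity. Qed.

Lemma Rsum_flat_map {A B} (f : B -> R) (g : A -> list B) l :
  Rsum_list f (flat_map g l) = Rsum_list (fun a => Rsum_list f (g a)) l.
Proof. induction l; [reflexivity|]. simpl flat_map. rewrite Rsum_app, Rsum_cons, IHl. reflexivity. Qed.

Lemma Rsum_swap {A B} (F : A -> B -> R) l1 l2 :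
  Rsum_list (fun a => Rsum_list (fun b => F a b) l2) l1 =
  Rsum_list (fun b => Rsum_list (fun a => F a b) l1) l2.
Proof.
  induction l1 as [|a l1 IH].
  - rewrite Rsum_nil. symmetry. rewrite <- (Rmult_0_r (INR (length l2))), <- Rsum_const.
    apply Rsum_ext_in. reflexivity.
  - rewrite Rsum_cons, IH, <- Rsum_plus. apply Rsum_ext_in. reflexivity.
Qed.

Lemma Rsum_ge_term {A} (f : A -> R) l a0 :
  (forall a, In a l -> 0 <= f a) -> In a0 l -> f a0 <= Rsum_list f l.
Proof.
  induction l as [|a l IH]; intros H Hin; [destruct Hin|]. rewrite Rsum_cons.
  assert (0 <= f a) by (apply H; left; auto).
  assert (0 <= Rsum_list f l) by (apply Rsum_nonneg; intros; apply H; right; auto).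
  destruct Hin as [->|Hin]; [lra|].
  assert (f a0 <= Rsum_list f l) by (apply IH; auto; intros; apply H; right; auto). lra.
Qed.

Lemma Rsum_ge_term_excess {A} (G : A -> R) l a m :
  In a l -> (forall b, In b l -> m <= G b) ->
  G a - m + INR (length l) * m <= Rsum_list G l.
Proof.
  intros Hin H.
  assert (G a - m <= Rsum_list (fun b => G b - m) l).
  { apply (Rsum_ge_term (fun b => G b - m)); auto. intros b Hb. specialize (H b Hb). lra. }
  rewrite Rsum_minus, Rsum_const in H0. lra.
Qed.

Lemma Rsum_update (F F' : nat -> R) l i :
  NoDup l -> In i l -> (forall j, j <> i -> F' j = F j) ->
  Rsum_list F' l = Rsum_list F l + (F' i - F i).
Proof.
  induction l as [|a l IH]; intros Hnd Hin H; [destruct Hin|]. inversion Hnd; subst.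
  rewrite !Rsum_cons. destruct (Nat.eq_dec a i) as [->|Hne].
  - rewrite (Rsum_ext_in F' F l); [lra|]. intros j Hj. apply H. intros ->; contradiction.
  - destruct Hin as [->|Hin]; [congruence|]. rewrite IH, H; auto. lra.
Qed.

Lemma ind_true (P : Prop) : P -> ind P = 1.
Proof. intros H; unfold ind; destruct (excluded_middle_informative P); tauto. Qed.

Lemma ind_false (P : Prop) : ~ P -> ind P = 0.
Proof. intros H; unfold ind; destruct (excluded_middle_informative P); tauto. Qed.

Lemma ind_bounds (P : Prop) : 0 <= ind P <= 1.
Proof. unfold ind; destruct (excluded_middle_informative P); lra. Qed.

Lemma ind_le_impl (P Q : Prop) : (P -> Q) -> ind P <= ind Q.
Proof.
  intros H; unfold ind; destruct (excluded_middle_informative P);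
  destruct (excluded_middle_informative Q); try lra; tauto.
Qed.

Lemma ind_le_Rsum_ind {A} (P : Prop) (Q : A -> Prop) l :
  (P -> exists a, In a l /\ Q a) -> ind P <= Rsum_list (fun a => ind (Q a)) l.
Proof.
  intros H. destruct (classic P) as [HP|HP].
  - destruct (H HP) as [a [Ha HQ]]. rewrite ind_true, <- (ind_true (Q a)) by auto.
    apply (Rsum_ge_term (fun a => ind (Q a))); auto. intros; apply ind_bounds.
  - rewrite ind_false by auto. apply Rsum_nonneg. intros; apply ind_bounds.
Qed.

Lemma Rsum_ind_le_1 {A} (P : A -> Prop) l :
  NoDup l -> (forall a b, In a l -> In b l -> P a -> P b -> a = b) ->
  Rsum_list (fun a => ind (P a)) l <= 1.
Proof.
  induction l as [|a l IH]; intros Hnd H; [rewrite Rsum_nil; lra|]. inversion Hnd; subst.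
  rewrite Rsum_cons. destruct (classic (P a)) as [Ha|Ha].
  - rewrite ind_true by auto.
    rewrite (Rsum_ext_in _ (fun _ => 0)), Rsum_const; [lra|].
    intros b Hb. apply ind_false. intros Hpb.
    assert (a = b) by (apply H; simpl; auto). subst; contradiction.
  - rewrite ind_false by auto.
    assert (Rsum_list (fun a => ind (P a)) l <= 1); [|lra].
    apply IH; auto. intros; apply H; simpl; auto.
Qed.

Lemma exists_min_in_list {A} (l : list A) (P : A -> Prop) (F : A -> R) a0 :
  In a0 l -> P a0 -> exists am, In am l /\ P am /\ forall a, In a l -> P a -> F am <= F a.
Proof.
  revert a0; induction l as [|a l IH]; intros a0 Hin HP; [destruct Hin|].
  destruct (classic (exists b, In b l /\ P b)) as [[b [Hb Pb]]|Hn].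
  - destruct (IH b Hb Pb) as [am [H1 [H2 H3]]].
    destruct (classic (P a /\ F a < F am)) as [[Pa Ha]|Hn].
    + exists a. repeat split; [left; auto|auto|]. intros c [<-|Hc] Pc; [lra|].
      specialize (H3 c Hc Pc). lra.
    + exists am. repeat split; [right; auto|auto|]. intros c [->|Hc] Pc; [|auto].
      destruct (Rle_dec (F am) (F c)); auto. exfalso; apply Hn; split; auto; lra.
  - destruct Hin as [<-|Hin]; [|exfalso; apply Hn; exists a0; auto].
    exists a. repeat split; [left; auto|auto|]. intros c [<-|Hc] Pc; [lra|].
    exfalso; apply Hn; exists c; auto.
Qed.

Lemma Un_cv_const c : Un_cv (fun _ => c) c.
Proof. intros e He. exists 0%nat. intros. unfold Rdist. rewrite Rminus_diag, Rabs_R0. auto. Qed.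

Lemma Un_cv_le_ub u l M : Un_cv u l -> (forall n, u n <= M) -> l <= M.
Proof. intros Hc Hm. exact (Rle_cv_lim Hm Hc (Un_cv_const M)). Qed.

Lemma Un_cv_ge_lb u l M : Un_cv u l -> (forall n, M <= u n) -> M <= l.
Proof. intros Hc Hm. exact (Rle_cv_lim Hm (Un_cv_const M) Hc). Qed.

Lemma Un_cv_le_ub_S u l M : Un_cv u l -> (forall n, u (S n) <= M) -> l <= M.
Proof.
  intros Hc Hm. apply (Un_cv_le_ub (fun n => u (n + 1)%nat)); [apply CV_shift'; auto|].
  intros n. rewrite Nat.add_1_r. auto.
Qed.

Lemma Un_cv_Rsum {A} (s : nat -> A -> R) (h f : A -> R) l :
  (forall a, In a l -> Un_cv (fun n => s n a) (h a)) ->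
  Un_cv (fun n => Rsum_list (fun a => f a * s n a) l) (Rsum_list (fun a => f a * h a) l).
Proof.
  induction l as [|a l IH]; intros H.
  - apply (Un_cv_ext (fun _ => 0)); [reflexivity|apply Un_cv_const].
  - apply (Un_cv_ext (fun n => f a * s n a + Rsum_list (fun a => f a * s n a) l)); [reflexivity|].
    apply CV_plus; [apply CV_mult; [apply Un_cv_const|apply H; left; auto]|].
    apply IH. intros; apply H; right; auto.
Qed.

(** * Lattice points of the torus *)

Lemma coord_cons0 a t : coord (a :: t) 0 = a.
Proof. reflexivity. Qed.

Lemma coord_consS a t j : coord (a :: t) (S j) = coord t j.
Proof. reflexivity. Qed.

Lemma list_coord_ext (x y : list Z) :
  length x = length y -> (forall j, coord x j = coord y j) -> x = y.
Proof.
  revert y; induction x as [|a x IH]; intros [|b y] Hl H; simpl in *; try lia; auto.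
  f_equal; [apply (H 0%nat)|]. apply IH; [lia|]. intros j; apply (H (S j)).
Qed.

Lemma coord_map (f : Z -> Z) y i : (i < length y)%nat -> coord (map f y) i = f (coord y i).
Proof.
  revert i; induction y as [|a y IH]; intros [|i] H; simpl in *; try lia; auto.
  apply IH; lia.
Qed.

Lemma coord_map_seq (f : nat -> Z) k j : (j < k)%nat -> coord (map f (seq 0 k)) j = f j.
Proof.
  intros H. unfold coord. rewrite (nth_indep _ _ (f 0%nat)) by (rewrite length_map, length_seq; auto).
  rewrite map_nth, seq_nth by auto. reflexivity.
Qed.

Lemma length_replace_nth i v x : length (replace_nth i v x) = length x.
Proof. revert i; induction x; intros [|i]; simpl; auto. Qed.

Lemma coord_replace_nth_same i v x : (i < length x)%nat -> coord (replace_nth i v x) i = v.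
Proof. revert i; induction x; intros [|i] H; simpl in *; try lia; auto. apply IHx; lia. Qed.

Lemma coord_replace_nth_other i j v x : j <> i -> coord (replace_nth i v x) j = coord x j.
Proof.
  revert i j; induction x; intros [|i] [|j] H; simpl; auto; try congruence.
  apply IHx. lia.
Qed.

Lemma grid_spec d N x :
  In x (grid d N) <-> length x = d /\ forall j, (j < d)%nat -> (0 <= coord x j < Z.of_nat N)%Z.
Proof.
  revert x; induction d as [|d IH]; intros x; simpl.
  - split; [intros [<-|[]]; split; auto; intros; lia|].
    intros [Hl _]. destruct x; simpl in Hl; [auto|lia].
  - rewrite in_flat_map. split.
    + intros [a [Ha Hx]]. apply in_map_iff in Ha as [n [<- Hn]]. apply in_seq in Hn.
      apply in_map_iff in Hx as [t [<- Ht]]. apply IH in Ht as [Hl Ht].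
      split; [simpl; auto|]. intros [|j] Hj; [rewrite coord_cons0; lia|].
      rewrite coord_consS. apply Ht. lia.
    + intros [Hl Hc]. destruct x as [|a t]; simpl in Hl; [lia|].
      pose proof (Hc 0%nat ltac:(lia)) as H0. rewrite coord_cons0 in H0.
      exists a. split.
      * apply in_map_iff. exists (Z.to_nat a). split; [lia|]. apply in_seq. lia.
      * apply in_map, IH. split; [lia|]. intros j Hj.
        specialize (Hc (S j) ltac:(lia)). rewrite coord_consS in Hc. auto.
Qed.

Lemma grid_length d N x : In x (grid d N) -> length x = d.
Proof. intros H; apply grid_spec in H; tauto. Qed.

Lemma grid_cons d N a t : (0 <= a < Z.of_nat N)%Z -> In t (grid d N) -> In (a :: t) (grid (S d) N).
Proof.
  intros Ha Ht. apply grid_spec in Ht as [Hl Hc]. apply grid_spec. split; [simpl; auto|].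
  intros [|j] Hj; [rewrite coord_cons0; lia|rewrite coord_consS; apply Hc; lia].
Qed.

Lemma grid_replace_nth d N x i v : In x (grid d N) -> (i < d)%nat -> (0 <= v < Z.of_nat N)%Z ->
  In (replace_nth i v x) (grid d N).
Proof.
  intros Hx Hi Hv. apply grid_spec in Hx as [Hl Hc]. apply grid_spec.
  split; [rewrite length_replace_nth; auto|]. intros j Hj.
  destruct (Nat.eq_dec j i) as [->|Hne].
  - rewrite coord_replace_nth_same by lia; auto.
  - rewrite coord_replace_nth_other; auto.
Qed.

Lemma torus_nbrs_eq d N x :
  torus_nbrs d N x = flat_map (fun i =>
     [replace_nth i ((coord x i + 1) mod Z.of_nat N)%Z x;
      replace_nth i ((coord x i + -1) mod Z.of_nat N)%Z x]) (seq 0 d).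
Proof. reflexivity. Qed.

Lemma length_torus_nbrs d N x : length (torus_nbrs d N x) = (2 * d)%nat.
Proof.
  rewrite torus_nbrs_eq.
  assert (H : forall s k, length (flat_map (fun i =>
     [replace_nth i ((coord x i + 1) mod Z.of_nat N)%Z x;
      replace_nth i ((coord x i + -1) mod Z.of_nat N)%Z x]) (seq s k)) = (2 * k)%nat).
  { intros s k; revert s; induction k as [|k IH]; intros s; [reflexivity|].
    cbn [seq flat_map]. rewrite length_app, IH. simpl. lia. }
  apply H.
Qed.

Lemma in_torus_nbrs d N x y :
  In y (torus_nbrs d N x) <-> exists i s, (i < d)%nat /\ (s = 1 \/ s = -1)%Z /\
     y = replace_nth i ((coord x i + s) mod Z.of_nat N)%Z x.
Proof.
  rewrite torus_nbrs_eq, in_flat_map. split.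
  - intros [i [Hi Hy]]. apply in_seq in Hi. simpl in Hy.
    destruct Hy as [<-|[<-|[]]]; [exists i, 1%Z|exists i, (-1)%Z]; repeat split; auto; lia.
  - intros [i [s [Hi [Hs ->]]]]. exists i. split; [apply in_seq; lia|].
    destruct Hs as [->| ->]; simpl; auto.
Qed.

Lemma torus_nbr_in_grid d N x y : (0 < N)%nat -> In x (grid d N) -> In y (torus_nbrs d N x) ->
  In y (grid d N).
Proof.
  intros HN Hx Hy. apply in_torus_nbrs in Hy as [i [s [Hi [Hs ->]]]].
  apply grid_replace_nth; auto. apply Z.mod_pos_bound. lia.
Qed.

(* Points from which no nearest-neighbour step wraps around the torus. *)
Definition interior d N x := forall j, (j < d)%nat -> (1 <= coord x j <= Z.of_nat N - 2)%Z.

Lemma interior_nbr_mod d N x i s : interior d N x -> (i < d)%nat -> (s = 1 \/ s = -1)%Z ->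
  ((coord x i + s) mod Z.of_nat N = coord x i + s)%Z.
Proof. intros Hx Hi Hs. specialize (Hx i Hi). apply Z.mod_small. destruct Hs; subst; lia. Qed.

Lemma in_torus_nbrs_interior d N x y : interior d N x -> In y (torus_nbrs d N x) ->
  exists i s, (i < d)%nat /\ (s = 1 \/ s = -1)%Z /\ y = replace_nth i (coord x i + s)%Z x.
Proof.
  intros Hx Hy. apply in_torus_nbrs in Hy as [i [s [Hi [Hs ->]]]].
  exists i, s. rewrite (interior_nbr_mod d); auto.
Qed.

Lemma interior_step_in_torus_nbrs d N x i s : interior d N x -> (i < d)%nat -> (s = 1 \/ s = -1)%Z ->
  In (replace_nth i (coord x i + s)%Z x) (torus_nbrs d N x).
Proof.
  intros Hx Hi Hs. apply in_torus_nbrs. exists i, s. rewrite (interior_nbr_mod d); auto.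
Qed.

Lemma Rsum_torus_nbrs_interior d N x (f : list Z -> R) :
  interior d N x ->
  Rsum_list f (torus_nbrs d N x) =
  Rsum_list (fun i => f (replace_nth i (coord x i + 1)%Z x) +
                      f (replace_nth i (coord x i + -1)%Z x)) (seq 0 d).
Proof.
  intros H. rewrite torus_nbrs_eq, Rsum_flat_map. apply Rsum_ext_in.
  intros i Hi. apply in_seq in Hi.
  rewrite !Rsum_cons, Rsum_nil, !(interior_nbr_mod d) by (auto; lia). ring.
Qed.

Lemma NoDup_Zseq N : NoDup (map Z.of_nat (seq 0 N)).
Proof. apply NoDup_map_NoDup_ForallPairs; [intros a b _ _ H; lia|apply seq_NoDup]. Qed.

Lemma length_Zseq N : length (map Z.of_nat (seq 0 N)) = N.
Proof. rewrite length_map, length_seq. auto. Qed.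

Lemma Rsum_grid_S k N (F : list Z -> R) :
  Rsum_list F (grid (S k) N) =
  Rsum_list (fun a => Rsum_list (fun t => F (a :: t)) (grid k N)) (map Z.of_nat (seq 0 N)).
Proof. cbn [grid]. rewrite Rsum_flat_map. apply Rsum_ext_in. intros. apply Rsum_map. Qed.

Lemma Rsum_grid_const k N : Rsum_list (fun _ => 1) (grid k N) = INR N ^ k.
Proof.
  induction k as [|k IH]; [simpl; lra|]. rewrite Rsum_grid_S.
  rewrite (Rsum_ext_in _ (fun _ => INR N ^ k)) by (intros; apply IH).
  rewrite Rsum_const, length_Zseq. simpl. ring.
Qed.

Lemma count_grid_unique_but_one k N i (Q : list Z -> Prop) : (i < k)%nat ->
  (forall x x', In x (grid k N) -> In x' (grid k N) -> Q x -> Q x' ->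
     (forall j, j <> i -> coord x j = coord x' j) -> x = x') ->
  Rsum_list (fun x => ind (Q x)) (grid k N) <= INR N ^ (k - 1).
Proof.
  revert i Q; induction k as [|k IH]; intros i Q Hi HU; [lia|]. rewrite Rsum_grid_S.
  destruct i as [|i'].
  - rewrite Rsum_swap. replace (S k - 1)%nat with k by lia. rewrite <- Rsum_grid_const.
    apply Rsum_le_in. intros t Ht. apply Rsum_ind_le_1; [apply NoDup_Zseq|].
    intros a b Ha Hb Hqa Hqb.
    apply in_map_iff in Ha as [na [<- Hna]]. apply in_map_iff in Hb as [nb [<- Hnb]].
    apply in_seq in Hna, Hnb.
    assert (E : Z.of_nat na :: t = Z.of_nat nb :: t).
    { apply HU; auto; try (apply grid_cons; auto; lia). intros [|j] Hj; [lia|reflexivity]. }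
    inversion E; auto.
  - replace (S k - 1)%nat with (S (k - 1)) by lia. rewrite <- tech_pow_Rmult.
    replace (INR N * INR N ^ (k - 1))
      with (Rsum_list (fun _ => INR N ^ (k - 1)) (map Z.of_nat (seq 0 N)))
      by (rewrite Rsum_const, length_Zseq; ring).
    apply Rsum_le_in. intros a Ha. apply in_map_iff in Ha as [na [<- Hna]]. apply in_seq in Hna.
    apply (IH i' (fun t => Q (Z.of_nat na :: t))); [lia|].
    intros x x' Hx Hx' Hq Hq' Hc.
    assert (E : Z.of_nat na :: x = Z.of_nat na :: x').
    { apply HU; auto; try (apply grid_cons; auto; lia).
      intros [|j] Hj; [reflexivity|]. rewrite !coord_consS. apply Hc. lia. }
    inversion E; auto.
Qed.

Lemma count_Zseq_interval (lo hi : Z) n : (0 <= lo)%Z ->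
  Rsum_list (fun a => ind (lo <= a <= hi)%Z) (map Z.of_nat (seq 0 n)) =
  IZR (Z.max 0 (Z.min hi (Z.of_nat n - 1) - lo + 1)).
Proof.
  intros Hlo. induction n as [|n IH]; [simpl; f_equal; lia|].
  rewrite seq_S, map_app, Rsum_app, IH. simpl map. rewrite Rsum_cons, Rsum_nil.
  destruct (classic (lo <= Z.of_nat n <= hi)%Z).
  - rewrite ind_true, Rplus_0_r, <- plus_IZR by auto. f_equal. lia.
  - rewrite ind_false, !Rplus_0_r by auto. f_equal. lia.
Qed.

Lemma count_grid_box k N (lo hi : Z) : (0 <= lo)%Z -> (lo <= hi)%Z -> (hi < Z.of_nat N)%Z ->
  Rsum_list (fun t => ind (forall j, (j < k)%nat -> (lo <= coord t j <= hi)%Z)) (grid k N) =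
  IZR (hi - lo + 1) ^ k.
Proof.
  intros H1 H2 H3. induction k as [|k IH].
  - cbn [grid]. rewrite Rsum_cons, Rsum_nil, ind_true; [simpl; lra|]. intros; lia.
  - rewrite Rsum_grid_S.
    rewrite (Rsum_ext_in _ (fun a => IZR (hi - lo + 1) ^ k * ind (lo <= a <= hi)%Z)).
    + rewrite Rsum_scal, count_Zseq_interval by auto. simpl. rewrite Rmult_comm. do 2 f_equal. lia.
    + intros a Ha. rewrite <- IH, Rmult_comm, <- Rsum_scal. apply Rsum_ext_in. intros t Ht.
      destruct (classic (lo <= a <= hi)%Z) as [Ha'|Ha'].
      * rewrite (ind_true (lo <= a <= hi)%Z), Rmult_1_l by auto.
        apply Rle_antisym; apply ind_le_impl.
        -- intros H j Hj. apply (H (S j)). lia.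
        -- intros H [|j] Hj; [rewrite coord_cons0; auto|rewrite coord_consS; apply H; lia].
      * rewrite (ind_false (lo <= a <= hi)%Z), Rmult_0_l by auto. apply ind_false.
        intros H. apply Ha', (H 0%nat). lia.
Qed.

(** * Harmonic functions and escape probabilities *)

(* Discrete minimum principle: at a negative minimum the mean-value inequality forces the
   neighbour in direction [e_0] to be a minimum too, so minima would march off the torus. *)
Lemma torus_min_principle d N (S : list Z -> Prop) (F : list Z -> R) :
  (0 < d)%nat ->
  (forall z, S z -> In z (grid d N) /\ interior d N z) ->
  (forall z w, S z -> In w (torus_nbrs d N z) -> ~ S w -> 0 <= F w) ->
  (forall z, S z -> Rsum_list F (torus_nbrs d N z) <= 2 * INR d * F z) ->
  forall z, S z -> 0 <= F z.
Proof.
  intros Hd HS Hout Hsuper z Hz. destruct (Rle_dec 0 (F z)) as [|Hneg]; auto. exfalso.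
  destruct (exists_min_in_list (grid d N) S F z (proj1 (HS z Hz)) Hz) as [zm [_ [Hzm Hmin]]].
  set (m := F zm).
  assert (Hm : m < 0) by (specialize (Hmin z (proj1 (HS z Hz)) Hz); unfold m; lra).
  assert (Hmarch : forall k, exists w, S w /\ F w = m /\ (Z.of_nat k <= coord w 0)%Z).
  { induction k as [|k [w [Hw [HFw Hk]]]].
    - exists zm. repeat split; auto. destruct (HS zm Hzm) as [Hg _].
      apply grid_spec in Hg as [_ Hc]. specialize (Hc 0%nat Hd). lia.
    - destruct (HS w Hw) as [Hwg Iw].
      assert (Hnb : forall v, In v (torus_nbrs d N w) -> m <= F v).
      { intros v Hv. destruct (classic (S v)) as [Sv|Sv].
        - apply Hmin; auto. apply (HS v Sv).
        - specialize (Hout w v Hw Hv Sv). lra. }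
      set (ws := replace_nth 0 (coord w 0 + 1)%Z w).
      assert (Hws : In ws (torus_nbrs d N w)) by (apply interior_step_in_torus_nbrs; auto).
      pose proof (Rsum_ge_term_excess F (torus_nbrs d N w) ws m Hws Hnb) as Hexc.
      rewrite length_torus_nbrs, mult_INR in Hexc. simpl INR in Hexc.
      pose proof (Hsuper w Hw) as Hsw. rewrite HFw in Hsw.
      assert (HFws : F ws = m) by (pose proof (Hnb ws Hws); lra).
      exists ws. repeat split; auto.
      + destruct (classic (S ws)) as [|Sws]; auto. specialize (Hout w ws Hw Hws Sws). lra.
      + unfold ws. rewrite coord_replace_nth_same by (rewrite (grid_length d N); auto). lia. }
  destruct (Hmarch N) as [w [Hw [_ Hk]]]. destruct (HS w Hw) as [Hg _].
  apply grid_spec in Hg as [_ Hc]. specialize (Hc 0%nat Hd). lia.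
Qed.

Section EscapeProbability.
Variables (d N : nat) (gam chi : R).
Hypothesis Hd : (0 < d)%nat.

Lemma esc_approx_Delta n y : inDelta d N gam chi y -> esc_approx d N gam chi n y = 1.
Proof. intros H. destruct n; simpl; destruct (excluded_middle_informative _); tauto. Qed.

Lemma esc_approx_0 y : ~ inDelta d N gam chi y -> esc_approx d N gam chi 0 y = 0.
Proof. intros H. simpl; destruct (excluded_middle_informative _); tauto. Qed.

Lemma esc_approx_S m y : ~ inDelta d N gam chi y ->
  esc_approx d N gam chi (S m) y = / (2 * INR d) *
    Rsum_list (fun z => (1 - ind (inB d N gam chi z)) * esc_approx d N gam chi m z)
              (torus_nbrs d N y).
Proof. intros H. simpl; destruct (excluded_middle_informative _); tauto. Qed.

Lemma mean_nbrs_bounds (g : list Z -> R) y :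
  (forall z, In z (torus_nbrs d N y) -> ~ inB d N gam chi z -> 0 <= g z <= 1) ->
  0 <= / (2 * INR d) * Rsum_list (fun z => (1 - ind (inB d N gam chi z)) * g z)
                                  (torus_nbrs d N y) <= 1.
Proof.
  intros Hg. assert (Hd' : 0 < INR d) by (apply lt_0_INR; lia).
  assert (Hterm : forall z, In z (torus_nbrs d N y) -> 0 <= (1 - ind (inB d N gam chi z)) * g z <= 1).
  { intros z Hz. destruct (classic (inB d N gam chi z)) as [HB|HB].
    - rewrite ind_true by auto. lra.
    - rewrite ind_false by auto. specialize (Hg z Hz HB). lra. }
  assert (0 <= Rsum_list (fun z => (1 - ind (inB d N gam chi z)) * g z) (torus_nbrs d N y)
            <= 2 * INR d).
  { split; [apply Rsum_nonneg; intros; apply Hterm; auto|].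
    replace (2 * INR d) with (INR (length (torus_nbrs d N y)) * 1)
      by (rewrite length_torus_nbrs, mult_INR; simpl; lra).
    rewrite <- Rsum_const. apply Rsum_le_in. intros; apply Hterm; auto. }
  split; [apply Rmult_le_pos; [left; apply Rinv_0_lt_compat|]; lra|].
  apply (Rmult_le_reg_l (2 * INR d)); [lra|]. rewrite <- Rmult_assoc, Rinv_r by lra. lra.
Qed.

Lemma esc_approx_bounds n y : 0 <= esc_approx d N gam chi n y <= 1.
Proof.
  revert y; induction n as [|n IH]; intros y;
    destruct (classic (inDelta d N gam chi y)) as [HD|HD].
  - rewrite esc_approx_Delta; auto; lra.
  - rewrite esc_approx_0; auto; lra.
  - rewrite esc_approx_Delta; auto; lra.
  - rewrite esc_approx_S by auto. apply mean_nbrs_bounds. intros; apply IH.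
Qed.

Variable h : list Z -> R.
Hypothesis HN : (0 < N)%nat.
Hypothesis Hh : forall x, In x (grid d N) -> Un_cv (fun n => esc_approx d N gam chi n x) (h x).

Lemma h_bounds x : In x (grid d N) -> 0 <= h x <= 1.
Proof.
  intros Hx. split.
  - apply (Un_cv_ge_lb _ _ _ (Hh x Hx)). intros n; apply esc_approx_bounds.
  - apply (Un_cv_le_ub _ _ _ (Hh x Hx)). intros n; apply esc_approx_bounds.
Qed.

Lemma h_Delta x : In x (grid d N) -> inDelta d N gam chi x -> h x = 1.
Proof.
  intros Hx HD. apply (UL_sequence _ _ _ (Hh x Hx)).
  apply (Un_cv_ext (fun _ => 1)); [|apply Un_cv_const]. intros n. rewrite esc_approx_Delta; auto.
Qed.

Lemma h_mean_value x : In x (grid d N) -> ~ inDelta d N gam chi x ->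
  h x = / (2 * INR d) * Rsum_list (fun z => (1 - ind (inB d N gam chi z)) * h z)
                                  (torus_nbrs d N x).
Proof.
  intros Hx HD. apply (UL_sequence (fun n => esc_approx d N gam chi (n + 1) x)).
  - apply (CV_shift' (fun n => esc_approx d N gam chi n x) 1%nat (h x)). apply Hh; auto.
  - apply (Un_cv_ext (fun n => / (2 * INR d) * Rsum_list (fun z => (1 - ind (inB d N gam chi z)) *
       esc_approx d N gam chi n z) (torus_nbrs d N x))).
    + intros n. rewrite Nat.add_1_r, esc_approx_S by auto. reflexivity.
    + apply CV_mult; [apply Un_cv_const|]. apply Un_cv_Rsum. intros a Ha. apply Hh.
      eapply torus_nbr_in_grid; eauto.
Qed.

Lemma h_ge_nbr x w : In x (grid d N) -> ~ inDelta d N gam chi x -> In w (torus_nbrs d N x) ->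
  ~ inB d N gam chi w -> / (2 * INR d) * h w <= h x.
Proof.
  intros Hx HD Hw HwB. rewrite (h_mean_value x) by auto.
  assert (0 < INR d) by (apply lt_0_INR; lia).
  apply Rmult_le_compat_l; [left; apply Rinv_0_lt_compat; lra|].
  replace (h w) with ((1 - ind (inB d N gam chi w)) * h w) by (rewrite ind_false by auto; ring).
  apply (Rsum_ge_term (fun z => (1 - ind (inB d N gam chi z)) * h z)); auto.
  intros a Ha. apply Rmult_le_pos; [pose proof (ind_bounds (inB d N gam chi a)); lra|].
  apply h_bounds. eapply torus_nbr_in_grid; eauto.
Qed.
End EscapeProbability.

(** * Elementary estimates *)

Lemma sqr_le_bounds a b : 0 <= b -> a ^ 2 <= b ^ 2 -> - b <= a <= b.
Proof. intros Hb H. simpl in H. split; nra. Qed.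

Lemma IZR_sqr_le (a b : Z) : (Z.abs a <= Z.abs b)%Z -> IZR a ^ 2 <= IZR b ^ 2.
Proof. intros H. simpl. rewrite !Rmult_1_r, <- !mult_IZR. apply IZR_le. nia. Qed.

Lemma Rsum_mult_le_CS (a b : nat -> R) l A B : 0 < A -> 0 < B ->
  Rsum_list (fun j => a j ^ 2) l <= A ^ 2 -> Rsum_list (fun j => b j ^ 2) l <= B ^ 2 ->
  Rsum_list (fun j => a j * b j) l <= A * B.
Proof.
  intros HA HB Ha Hb. set (lam := B / A).
  assert (Hlam : 0 < lam) by (unfold lam; apply Rdiv_lt_0_compat; auto).
  apply Rle_trans with (Rsum_list (fun j => lam / 2 * a j ^ 2 + / (2 * lam) * b j ^ 2) l).
  - apply Rsum_le_in. intros j _. apply (Rmult_le_reg_l (2 * lam)); [lra|].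
    replace (2 * lam * (lam / 2 * a j ^ 2 + / (2 * lam) * b j ^ 2))
      with ((lam * a j) ^ 2 + b j ^ 2) by (field; lra).
    pose proof (pow2_ge_0 (lam * a j - b j)). simpl in *. nra.
  - rewrite Rsum_plus, !Rsum_scal.
    assert (lam / 2 * Rsum_list (fun j => a j ^ 2) l <= lam / 2 * A ^ 2)
      by (apply Rmult_le_compat_l; lra).
    assert (/ (2 * lam) * Rsum_list (fun j => b j ^ 2) l <= / (2 * lam) * B ^ 2)
      by (apply Rmult_le_compat_l; auto; left; apply Rinv_0_lt_compat; lra).
    replace (A * B) with (lam / 2 * A ^ 2 + / (2 * lam) * B ^ 2) by (unfold lam; field; lra).
    lra.
Qed.

Definition Ztrunc (t : R) : Z := if Rle_dec 0 t then Int_part t else (- Int_part (- t))%Z.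

Lemma Ztrunc_spec t : (0 <= t -> 0 <= IZR (Ztrunc t) <= t /\ t < IZR (Ztrunc t) + 1) /\
                      (t < 0 -> t <= IZR (Ztrunc t) <= 0 /\ IZR (Ztrunc t) < t + 1).
Proof.
  assert (Hfl : forall u, 0 <= u -> 0 <= IZR (Int_part u) <= u /\ u < IZR (Int_part u) + 1).
  { intros u Hu. destruct (base_Int_part u) as [B1 B2].
    assert (IZR (-1) < IZR (Int_part u)) by lra. apply lt_IZR in H.
    assert (0 <= Int_part u)%Z by lia. apply IZR_le in H0. lra. }
  unfold Ztrunc. split; intros Ht; destruct (Rle_dec 0 t); try lra.
  - apply Hfl; auto.
  - rewrite opp_IZR. pose proof (Hfl (- t) ltac:(lra)). lra.
Qed.

Lemma Ztrunc_scale_bounds lam v : 0 < lam < 1 ->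
  IZR (Ztrunc (lam * v)) ^ 2 <= lam ^ 2 * v ^ 2 /\
  (v - IZR (Ztrunc (lam * v))) ^ 2 <= (1 - lam) ^ 2 * v ^ 2 + 2 * (1 - lam) * Rabs v + 1 /\
  (0 <= v -> 0 <= IZR (Ztrunc (lam * v)) <= v) /\ (v < 0 -> v <= IZR (Ztrunc (lam * v)) <= 0).
Proof.
  intros Hl. destruct (Ztrunc_spec (lam * v)) as [P1 P2].
  set (tr := IZR (Ztrunc (lam * v))) in *.
  destruct (Rle_dec 0 v) as [Hv|Hv].
  - destruct (P1 ltac:(nra)) as [A1 A2]. rewrite Rabs_right by lra.
    set (e := lam * v - tr). set (a := (1 - lam) * v).
    assert (0 <= e < 1) by (unfold e; lra). assert (0 <= a) by (unfold a; nra).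
    assert (Ediff : v - tr = a + e) by (unfold a, e; ring).
    split; [|split; [|split; intros; [nra|lra]]].
    + simpl. assert (tr * tr <= (lam * v) * (lam * v)) by nra. nra.
    + rewrite Ediff.
      replace ((1 - lam) ^ 2 * v ^ 2 + 2 * (1 - lam) * v + 1) with (a ^ 2 + 2 * a + 1)
        by (unfold a; ring). simpl. nra.
  - destruct (P2 ltac:(nra)) as [A1 A2]. rewrite Rabs_left by lra.
    set (e := tr - lam * v). set (a := (1 - lam) * (- v)).
    assert (0 <= e < 1) by (unfold e; lra). assert (0 <= a) by (unfold a; nra).
    assert (Ediff : v - tr = - (a + e)) by (unfold a, e; ring).
    split; [|split; [|split; intros; [lra|nra]]].
    + simpl. assert (tr * tr <= (lam * v) * (lam * v)) by nra. nra.
    + rewrite Ediff.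
      replace ((1 - lam) ^ 2 * v ^ 2 + 2 * (1 - lam) * - v + 1) with (a ^ 2 + 2 * a + 1)
        by (unfold a; ring). simpl. nra.
Qed.

Lemma quadratic_step_bound (rho u A b : R) :
  1 <= rho -> 0 <= u -> u <= rho + 1 -> 0 <= A -> 0 <= b ->
  A * (u - rho) - b * (u - rho) ^ 2 <=
  A * ((u ^ 2 - rho ^ 2) / (2 * rho)) - b * ((u ^ 2 - rho ^ 2) ^ 2 / (9 * rho ^ 2)).
Proof.
  intros H1 H2 H3 HA Hb.
  assert (P1 : u - rho <= (u ^ 2 - rho ^ 2) / (2 * rho)).
  { apply (Rmult_le_reg_l (2 * rho)); [lra|]. unfold Rdiv.
    replace (2 * rho * ((u ^ 2 - rho ^ 2) * / (2 * rho))) with (u ^ 2 - rho ^ 2) by (field; lra).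
    pose proof (pow2_ge_0 (u - rho)). simpl in *. nra. }
  assert (P2 : (u ^ 2 - rho ^ 2) ^ 2 / (9 * rho ^ 2) <= (u - rho) ^ 2).
  { apply (Rmult_le_reg_l (9 * rho ^ 2)); [simpl; nra|]. unfold Rdiv.
    replace (9 * rho ^ 2 * ((u ^ 2 - rho ^ 2) ^ 2 * / (9 * rho ^ 2))) with ((u ^ 2 - rho ^ 2) ^ 2)
      by (field; lra).
    replace ((u ^ 2 - rho ^ 2) ^ 2) with ((u - rho) ^ 2 * (u + rho) ^ 2) by ring.
    assert ((u + rho) ^ 2 <= 9 * rho ^ 2) by (simpl; nra).
    assert (0 <= (u - rho) ^ 2) by apply pow2_ge_0. nra. }
  assert (A * (u - rho) <= A * ((u ^ 2 - rho ^ 2) / (2 * rho))) by (apply Rmult_le_compat_l; auto).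
  assert (b * ((u ^ 2 - rho ^ 2) ^ 2 / (9 * rho ^ 2)) <= b * (u - rho) ^ 2)
    by (apply Rmult_le_compat_l; auto).
  lra.
Qed.

(* The two lattice steps [+-e_i] from a point at distance [rho] with [i]-th coordinate [v]
   land at distances [rp], [rm] with [rp^2, rm^2 = rho^2 +- 2 v + 1]. *)
Lemma quadratic_pair_bound (rho v rp rm A b : R) :
  1 <= rho -> v ^ 2 <= rho ^ 2 -> 0 <= rp -> 0 <= rm ->
  rp ^ 2 = rho ^ 2 + 2 * v + 1 -> rm ^ 2 = rho ^ 2 - 2 * v + 1 -> 0 <= A -> 0 <= b ->
  (A * (rp - rho) - b * (rp - rho) ^ 2) + (A * (rm - rho) - b * (rm - rho) ^ 2) <=
  A / rho - 8 * b * v ^ 2 / (9 * rho ^ 2).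
Proof.
  intros H1 Hv Hp Hm Ep Em HA Hb.
  assert (Hvr : - rho <= v <= rho) by (simpl in Hv; split; nra).
  pose proof (quadratic_step_bound rho rp A b H1 Hp ltac:(simpl in Ep; nra) HA Hb) as S1.
  pose proof (quadratic_step_bound rho rm A b H1 Hm ltac:(simpl in Em; nra) HA Hb) as S2.
  rewrite Ep in S1. rewrite Em in S2.
  replace (rho ^ 2 + 2 * v + 1 - rho ^ 2) with (2 * v + 1) in S1 by ring.
  replace (rho ^ 2 - 2 * v + 1 - rho ^ 2) with (- 2 * v + 1) in S2 by ring.
  assert (E : A * ((2 * v + 1) / (2 * rho)) - b * ((2 * v + 1) ^ 2 / (9 * rho ^ 2)) +
              (A * ((- 2 * v + 1) / (2 * rho)) - b * ((- 2 * v + 1) ^ 2 / (9 * rho ^ 2))) =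
              A / rho - 8 * b * v ^ 2 / (9 * rho ^ 2) - 2 * b / (9 * rho ^ 2)) by (field; lra).
  assert (0 <= 2 * b / (9 * rho ^ 2)).
  { unfold Rdiv. apply Rmult_le_pos; [lra|]. left. apply Rinv_0_lt_compat. simpl; nra. }
  lra.
Qed.

Definition sqd d (x y : list Z) := Rsum_list (fun i => IZR (coord x i - coord y i) ^ 2) (seq 0 d).

Lemma sqd_nonneg d x y : 0 <= sqd d x y.
Proof. apply Rsum_nonneg. intros; apply pow2_ge_0. Qed.

Lemma sqd_sym d x y : sqd d x y = sqd d y x.
Proof. apply Rsum_ext_in. intros. rewrite !minus_IZR. ring. Qed.

Lemma sqd_self d x : sqd d x x = 0.
Proof.
  unfold sqd. rewrite (Rsum_ext_in _ (fun _ => 0)); [rewrite Rsum_const; ring|].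
  intros. rewrite Z.sub_diag. simpl; ring.
Qed.

Lemma sqd_ge_coord d x y j : (j < d)%nat -> IZR (coord x j - coord y j) ^ 2 <= sqd d x y.
Proof.
  intros Hj. apply (Rsum_ge_term (fun i => IZR (coord x i - coord y i) ^ 2));
    [intros; apply pow2_ge_0|apply in_seq; lia].
Qed.

Lemma sqd_replace_nth d c z i s : length z = d -> (i < d)%nat ->
  sqd d c (replace_nth i (coord z i + s)%Z z) =
  sqd d c z + (2 * IZR s * IZR (coord z i - coord c i) + IZR s ^ 2).
Proof.
  intros Hl Hi. unfold sqd.
  rewrite (Rsum_update (fun j => IZR (coord c j - coord z j) ^ 2)
    (fun j => IZR (coord c j - coord (replace_nth i (coord z i + s)%Z z) j) ^ 2) (seq 0 d) i).
  - rewrite coord_replace_nth_same by lia. rewrite !minus_IZR, plus_IZR. ring.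
  - apply seq_NoDup.
  - apply in_seq; lia.
  - intros j Hj. rewrite coord_replace_nth_other; auto.
Qed.

Lemma euclid_le_iff d x y r : 0 <= r -> (euclid d x y <= r <-> sqd d x y <= r ^ 2).
Proof.
  intros Hr. unfold euclid. fold (sqd d x y). pose proof (sqd_nonneg d x y) as H0. split; intros H.
  - assert (H1 : sqrt (sqd d x y) ^ 2 <= r ^ 2) by (apply pow_incr; split; auto; apply sqrt_pos).
    rewrite pow2_sqrt in H1 by auto. lra.
  - rewrite <- (sqrt_pow2 r) by auto. apply sqrt_le_1_alt. auto.
Qed.

Lemma sqrt_gt_of_sqr_lt r s : 0 <= r -> r ^ 2 < s -> r < sqrt s.
Proof.
  intros Hr Hs. rewrite <- (sqrt_pow2 r) by auto. apply sqrt_lt_1_alt.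
  split; [apply pow2_ge_0|auto].
Qed.

(** * The set B and its inner boundary *)

(* The centres allowed in [inB] are the integer points of the box [[lo, hi]^d], where
   [lo = ceil L] and [hi = floor (N - L)]; [B] is the set of torus points within distance [r]
   of that box, and the nearest box point is obtained by clamping each coordinate. *)
Section Box.
Variables (d N : nat) (gam chi : R) (lo hi : Z).
Let p := Rpower (INR N) gam.
Let r := chi * INR N.
Let L := Lpar N gam chi.
Hypothesis Hd : (0 < d)%nat.
Hypothesis HN : (0 < N)%nat.
Hypothesis Hr : 0 < r.
Hypothesis Hp : 2 < p.
Hypothesis Hlo : forall c : Z, L <= IZR c <-> (lo <= c)%Z.
Hypothesis Hhi : forall c : Z, IZR c <= INR N - L <-> (c <= hi)%Z.
Hypothesis Hlohi : (lo <= hi)%Z.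

Lemma L_eq : L = 2 * p + r.
Proof. reflexivity. Qed.

Lemma lo_pos : (0 < lo)%Z.
Proof. apply lt_IZR. pose proof (proj2 (Hlo lo) (Z.le_refl _)). pose proof L_eq. lra. Qed.

Lemma hi_le_N_sub_L : IZR hi <= INR N - L.
Proof. apply Hhi; lia. Qed.

Definition clamp t := Z.max lo (Z.min hi t).
Definition box_proj (y : list Z) := map clamp y.
Definition gap_sq (t : Z) := IZR (t - clamp t) ^ 2.
Definition box_sqdist (y : list Z) := Rsum_list (fun j => gap_sq (coord y j)) (seq 0 d).

Definition box_point (x : list Z) := length x = d /\
  forall i, (i < d)%nat -> Lpar N gam chi <= IZR (coord x i) <= INR N - Lpar N gam chi.

Lemma clamp_range t : (lo <= clamp t <= hi)%Z.
Proof. unfold clamp; lia. Qed.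

Lemma gap_sq_le t c : (lo <= c <= hi)%Z -> gap_sq t <= IZR (c - t) ^ 2.
Proof. intros Hc. apply IZR_sqr_le. unfold clamp; lia. Qed.

Lemma clamp_obtuse t c : (lo <= c <= hi)%Z -> ((t - clamp t) * (c - clamp t) <= 0)%Z.
Proof.
  intros Hc. unfold clamp. destruct (Z.le_gt_cases t lo); destruct (Z.le_gt_cases t hi);
    try (rewrite Z.min_r by lia); try (rewrite Z.min_l by lia); nia.
Qed.

Lemma box_point_coord x i : box_point x -> (i < d)%nat -> (lo <= coord x i <= hi)%Z.
Proof. intros [_ H] Hi. specialize (H i Hi). split; [apply Hlo|apply Hhi]; apply H. Qed.

Lemma box_point_proj y : length y = d -> box_point (box_proj y).
Proof.
  intros Hl. split; [unfold box_proj; rewrite length_map; auto|].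
  intros i Hi. unfold box_proj. rewrite coord_map by lia.
  pose proof (clamp_range (coord y i)). split; [apply Hlo|apply Hhi]; lia.
Qed.

Lemma sqd_box_proj y : length y = d -> sqd d (box_proj y) y = box_sqdist y.
Proof.
  intros Hl. apply Rsum_ext_in. intros i Hi. apply in_seq in Hi. unfold box_proj.
  rewrite coord_map by lia. unfold gap_sq. rewrite !minus_IZR. ring.
Qed.

Lemma inB_of_center x y : box_point x -> In y (grid d N) -> sqd d x y <= r ^ 2 ->
  inB d N gam chi y.
Proof.
  intros [Hl Hx] Hy Hs. split; auto. exists x. split; [auto|split; [auto|]].
  apply euclid_le_iff; fold r; [lra|auto].
Qed.

Lemma inB_center y : inB d N gam chi y -> exists x, box_point x /\ sqd d x y <= r ^ 2.
Proof.
  intros [Hy [x [Hl [Hx Hb]]]]. exists x. split; [split; auto|].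
  apply euclid_le_iff in Hb; [fold r in Hb; auto|fold r; lra].
Qed.

Lemma inB_iff y : inB d N gam chi y <-> In y (grid d N) /\ box_sqdist y <= r ^ 2.
Proof.
  split.
  - intros HB. split; [apply HB|]. destruct (inB_center y HB) as [x [Hx Hs]].
    eapply Rle_trans; [|apply Hs]. apply Rsum_le_in. intros i Hi. apply in_seq in Hi.
    apply gap_sq_le, box_point_coord; auto. lia.
  - intros [Hy Hs]. apply (inB_of_center (box_proj y)); auto.
    + apply box_point_proj, (grid_length d N); auto.
    + rewrite sqd_box_proj by (apply (grid_length d N); auto). auto.
Qed.

Lemma notB_box_sqdist y : In y (grid d N) -> ~ inB d N gam chi y -> r ^ 2 < box_sqdist y.
Proof.
  intros Hy Hn. destruct (Rlt_le_dec (r ^ 2) (box_sqdist y)); auto.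
  exfalso. apply Hn, inB_iff. auto.
Qed.

Lemma notB_sqd c z : box_point c -> In z (grid d N) -> ~ inB d N gam chi z -> r ^ 2 < sqd d c z.
Proof.
  intros Hc Hz HB. destruct (Rlt_le_dec (r ^ 2) (sqd d c z)); auto.
  exfalso; apply HB, (inB_of_center c); auto.
Qed.

Lemma inB_coord_margin y j : inB d N gam chi y -> (j < d)%nat ->
  2 * p <= IZR (coord y j) <= INR N - 2 * p.
Proof.
  intros HB Hj. destruct (inB_center y HB) as [x [Hx Hs]].
  pose proof (sqd_ge_coord d x y j Hj). destruct Hx as [_ Hx]. specialize (Hx j Hj).
  fold L in Hx. pose proof L_eq. rewrite minus_IZR in H.
  pose proof (sqr_le_bounds (IZR (coord x j) - IZR (coord y j)) r ltac:(lra) ltac:(lra)). lra.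
Qed.

Lemma inB_notDelta y : inB d N gam chi y -> ~ inDelta d N gam chi y.
Proof.
  intros HB [_ HD]. apply HD. exists y. split; auto.
  apply euclid_le_iff; [fold p; lra|]. rewrite sqd_self. simpl; nra.
Qed.

Lemma notDelta_near_B y : In y (grid d N) -> ~ inDelta d N gam chi y ->
  exists w, inB d N gam chi w /\ sqd d w y <= p ^ 2.
Proof.
  intros Hy HD. apply NNPP. intros Hn. apply HD. split; auto.
  intros [w [Hw Hb]]. apply Hn. exists w. split; auto.
  apply euclid_le_iff in Hb; auto. fold p; lra.
Qed.

Lemma notDelta_interior y : In y (grid d N) -> ~ inDelta d N gam chi y -> interior d N y.
Proof.
  intros Hy HD j Hj. destruct (notDelta_near_B y Hy HD) as [w [Hw Hs]].
  pose proof (inB_coord_margin w j Hw Hj). pose proof (sqd_ge_coord d w y j Hj).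
  rewrite minus_IZR in H0.
  pose proof (sqr_le_bounds (IZR (coord w j) - IZR (coord y j)) p ltac:(lra) ltac:(lra)).
  split.
  - apply le_IZR. lra.
  - apply Z.lt_succ_r, lt_IZR. rewrite succ_IZR, minus_IZR, <- INR_IZR_INZ. lra.
Qed.

Lemma inB_interior y : inB d N gam chi y -> interior d N y.
Proof. intros H. apply notDelta_interior; [apply H|apply inB_notDelta; auto]. Qed.

Lemma gap_sq_antitone t t' : (t <= t' <= hi)%Z -> gap_sq t' <= gap_sq t.
Proof. intros H. apply IZR_sqr_le. unfold clamp. lia. Qed.

Lemma gap_sq_monotone t t' : (lo <= t <= t')%Z -> gap_sq t <= gap_sq t'.
Proof. intros H. apply IZR_sqr_le. unfold clamp. lia. Qed.

Lemma gap_sq_crossing_unique (s t t' : Z) (R' : R) : (s = 1 \/ s = -1)%Z ->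
  gap_sq t <= R' -> R' < gap_sq (t + s) -> gap_sq t' <= R' -> R' < gap_sq (t' + s) -> t = t'.
Proof.
  intros Hs H1 H2 H3 H4.
  assert (Hgen : forall u u', (u < u')%Z -> gap_sq u <= R' -> R' < gap_sq (u + s) ->
            gap_sq u' <= R' -> R' < gap_sq (u' + s) -> False).
  { intros u u' Hu G1 G2 G3 G4. destruct Hs as [-> | ->].
    - destruct (Z.le_gt_cases (u + 1) hi).
      + assert (gap_sq (u + 1) <= gap_sq u) by (apply gap_sq_antitone; lia). lra.
      + assert (gap_sq (u + 1) <= gap_sq u') by (apply gap_sq_monotone; lia). lra.
    - destruct (Z.le_gt_cases u' hi).
      + assert (gap_sq (u' + -1) <= gap_sq u) by (apply gap_sq_antitone; lia). lra.
      + assert (gap_sq (u' + -1) <= gap_sq u') by (apply gap_sq_monotone; lia). lra. }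
  destruct (Z.lt_trichotomy t t') as [Hl|[He|Hl]]; auto; exfalso; eauto.
Qed.

Definition exits_B (i : nat) (s : Z) (x : list Z) :=
  inB d N gam chi x /\ ~ inB d N gam chi (replace_nth i (coord x i + s)%Z x).

Lemma box_sqdist_replace_nth x i v : (i < d)%nat -> length x = d ->
  box_sqdist (replace_nth i v x) = box_sqdist x + (gap_sq v - gap_sq (coord x i)).
Proof.
  intros Hi Hl. unfold box_sqdist.
  rewrite (Rsum_update (fun j => gap_sq (coord x j)) (fun j => gap_sq (coord (replace_nth i v x) j))
    (seq 0 d) i).
  - rewrite coord_replace_nth_same by lia. auto.
  - apply seq_NoDup.
  - apply in_seq; lia.
  - intros j Hj. rewrite coord_replace_nth_other; auto.
Qed.

Lemma exits_B_unique i s : (i < d)%nat -> (s = 1 \/ s = -1)%Z ->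
  forall x x', In x (grid d N) -> In x' (grid d N) -> exits_B i s x -> exits_B i s x' ->
  (forall j, j <> i -> coord x j = coord x' j) -> x = x'.
Proof.
  intros Hi Hs x x' Hx Hx' [HB Hn] [HB' Hn'] Hc.
  pose proof (grid_length d N x Hx) as Hl. pose proof (grid_length d N x' Hx') as Hl'.
  assert (Ex' : x' = replace_nth i (coord x' i) x).
  { apply list_coord_ext; [rewrite length_replace_nth; lia|]. intros j.
    destruct (Nat.eq_dec j i) as [->|Hne].
    - rewrite coord_replace_nth_same by lia; auto.
    - rewrite coord_replace_nth_other; auto. symmetry; auto. }
  pose proof (inB_interior x HB) as Ix. pose proof (inB_interior x' HB') as Ix'.
  apply notB_box_sqdist in Hn, Hn';
    try (apply (torus_nbr_in_grid d N x'); auto; apply interior_step_in_torus_nbrs; auto);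
    try (apply (torus_nbr_in_grid d N x); auto; apply interior_step_in_torus_nbrs; auto).
  apply inB_iff in HB as [_ HB]. apply inB_iff in HB' as [_ HB'].
  rewrite box_sqdist_replace_nth in Hn, Hn' by auto.
  assert (Hb' : box_sqdist x' = box_sqdist x + (gap_sq (coord x' i) - gap_sq (coord x i)))
    by (rewrite Ex' at 1; rewrite box_sqdist_replace_nth; auto).
  assert (coord x i = coord x' i).
  { apply (gap_sq_crossing_unique s _ _ (r ^ 2 - box_sqdist x + gap_sq (coord x i))); auto; lra. }
  apply list_coord_ext; [lia|]. intros j. destruct (Nat.eq_dec j i) as [->|Hne]; auto.
Qed.

Lemma inBdB_exits x : inBdB d N gam chi x ->
  exists is, In is (list_prod (seq 0 d) [1%Z; (-1)%Z]) /\ exits_B (fst is) (snd is) x.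
Proof.
  intros [HB [y [Hy Hn]]]. apply (in_torus_nbrs_interior d N x y (inB_interior x HB)) in Hy
    as [i [s [Hi [Hs ->]]]].
  exists (i, s). split; [apply in_prod; [apply in_seq; lia|destruct Hs as [-> | ->]; simpl; auto]|].
  split; auto.
Qed.

Lemma count_inBdB_upper :
  Rsum_list (fun x => ind (inBdB d N gam chi x)) (grid d N) <= 2 * INR d * INR N ^ (d - 1).
Proof.
  eapply Rle_trans.
  { apply Rsum_le_in. intros x _. apply (ind_le_Rsum_ind _ (fun is => exits_B (fst is) (snd is) x)).
    apply inBdB_exits. }
  rewrite Rsum_swap.
  replace (2 * INR d * INR N ^ (d - 1))
    with (Rsum_list (fun _ => INR N ^ (d - 1)) (list_prod (seq 0 d) [1%Z; (-1)%Z]))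
    by (rewrite Rsum_const, length_prod, length_seq, mult_INR; simpl; ring).
  apply Rsum_le_in. intros [i s] His. apply in_prod_iff in His as [Hi Hs]. apply in_seq in Hi.
  apply (count_grid_unique_but_one d N i); [lia|]. intros x x' Hx Hx' Hq Hq' Hc.
  apply (exits_B_unique i s); auto; [lia|]. simpl in Hs. destruct Hs as [<-|[<-|[]]]; auto.
Qed.

(* For every [t] in the box [[lo, hi]^(d-1)], the point [(hi + floor r, t)] lies in [B] while
   its neighbour [(hi + floor r + 1, t)] does not. *)
Lemma count_inBdB_lower :
  IZR (hi - lo + 1) ^ (d - 1) <= Rsum_list (fun x => ind (inBdB d N gam chi x)) (grid d N).
Proof.
  pose proof lo_pos. pose proof hi_le_N_sub_L. pose proof L_eq.
  set (k := (d - 1)%nat). assert (Hdk : d = S k) by (unfold k; lia).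
  set (R0 := Int_part r). destruct (base_Int_part r) as [HR1 HR2]. fold R0 in HR1, HR2.
  assert (HR0pos : (0 <= R0)%Z) by (assert (IZR (-1) < IZR R0) by lra; apply lt_IZR in H2; lia).
  set (A := (hi + R0)%Z).
  assert (HA : (A + 1 < Z.of_nat N)%Z).
  { apply lt_IZR. rewrite <- INR_IZR_INZ. unfold A. rewrite !plus_IZR. fold L in H0. lra. }
  rewrite <- (count_grid_box k N lo hi) by lia.
  replace (grid d N) with (grid (S k) N) by (rewrite Hdk; auto). rewrite Rsum_grid_S.
  eapply Rle_trans; [|apply (Rsum_ge_term _ _ A)].
  - apply Rsum_le_in. intros t Ht. apply ind_le_impl. intros Hbox.
    assert (Hg : In (A :: t) (grid d N)) by (rewrite Hdk; apply grid_cons; auto; lia).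
    assert (Hsum : forall v, box_sqdist (v :: t) = gap_sq v).
    { intros v. unfold box_sqdist. rewrite Hdk. cbn [seq]. rewrite Rsum_cons, coord_cons0.
      rewrite (Rsum_ext_in _ (fun _ => 0)); [rewrite Rsum_const; ring|].
      intros j Hj. apply in_seq in Hj. destruct j as [|j]; [lia|]. rewrite coord_consS.
      specialize (Hbox j ltac:(lia)). unfold gap_sq, clamp.
      replace (coord t j - Z.max lo (Z.min hi (coord t j)))%Z with 0%Z by lia. simpl; ring. }
    split.
    + apply inB_iff. split; auto. rewrite Hsum. unfold gap_sq, clamp.
      replace (A - Z.max lo (Z.min hi A))%Z with R0 by (unfold A; lia).
      apply pow_incr. split; [apply IZR_le; lia|lra].
    + exists (replace_nth 0 ((coord (A :: t) 0 + 1) mod Z.of_nat N)%Z (A :: t)). split.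
      * apply in_torus_nbrs. exists 0%nat, 1%Z. repeat split; auto; lia.
      * rewrite coord_cons0, Z.mod_small by lia. simpl replace_nth. intros HB.
        apply inB_iff in HB as [_ HB]. rewrite Hsum in HB. unfold gap_sq, clamp in HB.
        replace (A + 1 - Z.max lo (Z.min hi (A + 1)))%Z with (R0 + 1)%Z in HB by (unfold A; lia).
        rewrite plus_IZR in HB. assert (r ^ 2 < (IZR R0 + 1) ^ 2) by (simpl; nra). lra.
  - intros a _. apply Rsum_nonneg. intros; apply ind_bounds.
  - apply in_map_iff. exists (Z.to_nat A). split; [lia|]. apply in_seq. lia.
Qed.

(** * Lower bound for the escape probability *)

(* [outward y] is the vector from the nearest box point to [y]; [outward_dot y z] pairs it with
   [z - box_proj y], so [outward_dot y z / |outward y| - r] is an affine function which is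
   [<= 0] on [B] (the box lies behind the supporting hyperplane). *)
Definition outward (y : list Z) j := IZR (coord y j - coord (box_proj y) j).
Definition outward_dot (y z : list Z) :=
  Rsum_list (fun j => outward y j * IZR (coord z j - coord (box_proj y) j)) (seq 0 d).

Lemma sqd_box_proj_outward y : sqd d (box_proj y) y = Rsum_list (fun j => outward y j ^ 2) (seq 0 d).
Proof. apply Rsum_ext_in. intros. unfold outward. rewrite !minus_IZR. ring. Qed.

Lemma outward_dot_self y : outward_dot y y = sqd d (box_proj y) y.
Proof. rewrite sqd_box_proj_outward. apply Rsum_ext_in. intros. unfold outward. simpl. ring. Qed.

Lemma outward_dot_replace_nth y z i v : (i < d)%nat -> length z = d ->
  outward_dot y (replace_nth i v z) = outward_dot y z + outward y i * IZR (v - coord z i).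
Proof.
  intros Hi Hl. unfold outward_dot.
  rewrite (Rsum_update (fun j => outward y j * IZR (coord z j - coord (box_proj y) j))
     (fun j => outward y j * IZR (coord (replace_nth i v z) j - coord (box_proj y) j)) (seq 0 d) i).
  - rewrite coord_replace_nth_same by lia. rewrite !minus_IZR. ring.
  - apply seq_NoDup.
  - apply in_seq; lia.
  - intros j Hj. rewrite coord_replace_nth_other; auto.
Qed.

Lemma outward_dot_sub y z w : outward_dot y z - outward_dot y w =
  Rsum_list (fun j => outward y j * IZR (coord z j - coord w j)) (seq 0 d).
Proof. unfold outward_dot. rewrite <- Rsum_minus. apply Rsum_ext_in. intros. rewrite !minus_IZR. ring. Qed.

Section Outward.
Variables (y : list Z) (rho : R).
Hypothesis Hrho : rho ^ 2 = sqd d (box_proj y) y.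
Hypothesis Hrho_pos : 0 < rho.

Lemma outward_bounds j : (j < d)%nat -> - rho <= outward y j <= rho.
Proof.
  intros Hj. apply sqr_le_bounds; [lra|]. rewrite Hrho, sqd_box_proj_outward.
  apply (Rsum_ge_term (fun j => outward y j ^ 2)); [intros; apply pow2_ge_0|apply in_seq; lia].
Qed.

Lemma outward_dot_B z : length y = d -> inB d N gam chi z -> outward_dot y z <= rho * r.
Proof.
  intros Hl HB. destruct (inB_center z HB) as [c [Hc Hs]].
  replace (outward_dot y z) with (outward_dot y c + (outward_dot y z - outward_dot y c)) by ring.
  rewrite outward_dot_sub.
  assert (outward_dot y c <= 0).
  { unfold outward_dot. rewrite <- (Rmult_0_r (INR (length (seq 0 d)))), <- Rsum_const.
    apply Rsum_le_in. intros j Hj. apply in_seq in Hj. unfold outward, box_proj.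
    rewrite coord_map, <- mult_IZR by lia. apply IZR_le.
    pose proof (clamp_obtuse (coord y j) (coord c j) (box_point_coord c j Hc ltac:(lia))). lia. }
  assert (Rsum_list (fun j => outward y j * IZR (coord z j - coord c j)) (seq 0 d) <= rho * r).
  { apply Rsum_mult_le_CS; auto; [rewrite <- sqd_box_proj_outward, Hrho; lra|].
    rewrite sqd_sym in Hs. apply Hs. }
  lra.
Qed.

Lemma outward_dot_near z w : sqd d z w <= p ^ 2 -> outward_dot y z <= outward_dot y w + rho * p.
Proof.
  intros Hs. assert (outward_dot y z - outward_dot y w <= rho * p); [|lra].
  rewrite outward_dot_sub.
  apply Rsum_mult_le_CS; [lra|fold p; lra|rewrite <- sqd_box_proj_outward, Hrho; lra|apply Hs].
Qed.

Lemma outward_large_coord : exists j, (j < d)%nat /\ rho / INR d <= Rabs (outward y j).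
Proof.
  apply NNPP. intros Hn.
  assert (Hd1 : 1 <= INR d) by (apply (le_INR 1); lia).
  assert (Hall : forall j, In j (seq 0 d) -> outward y j ^ 2 < rho * (rho / INR d)).
  { intros j Hj. apply in_seq in Hj.
    assert (H1 : Rabs (outward y j) < rho / INR d).
    { destruct (Rlt_le_dec (Rabs (outward y j)) (rho / INR d)); auto.
      exfalso; apply Hn. exists j; split; auto; lia. }
    pose proof (outward_bounds j ltac:(lia)).
    assert (Rabs (outward y j) <= rho) by (apply Rabs_le; lra).
    rewrite <- pow2_abs. pose proof (Rabs_pos (outward y j)). simpl. nra. }
  assert (rho ^ 2 < rho ^ 2); [|lra].
  rewrite Hrho at 1. rewrite sqd_box_proj_outward.
  apply Rlt_le_trans with (Rsum_list (fun _ => rho * (rho / INR d)) (seq 0 d)).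
  - apply Rsum_lt_in; auto. intros E. apply (f_equal (@length nat)) in E.
    rewrite length_seq in E. simpl in E. lia.
  - rewrite Rsum_const, length_seq. right. field. lra.
Qed.

Definition plane_height z := outward_dot y z / rho - r.

Lemma plane_height_B z : length y = d -> inB d N gam chi z -> plane_height z <= 0.
Proof.
  intros Hl HB. pose proof (outward_dot_B z Hl HB). unfold plane_height.
  apply (Rmult_le_reg_l rho); auto. unfold Rdiv.
  replace (rho * (outward_dot y z * / rho - r)) with (outward_dot y z - rho * r) by (field; lra). lra.
Qed.

Lemma plane_height_notDelta z : length y = d -> In z (grid d N) -> ~ inDelta d N gam chi z ->
  plane_height z <= p.
Proof.
  intros Hl Hz HD. destruct (notDelta_near_B z Hz HD) as [w [Hw Hs]].
  pose proof (outward_dot_B w Hl Hw). rewrite sqd_sym in Hs. pose proof (outward_dot_near z w Hs).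
  unfold plane_height. apply (Rmult_le_reg_l rho); auto. unfold Rdiv.
  replace (rho * (outward_dot y z * / rho - r)) with (outward_dot y z - rho * r) by (field; lra). lra.
Qed.

Lemma plane_height_step z i s : length z = d -> (i < d)%nat ->
  plane_height (replace_nth i (coord z i + s)%Z z) = plane_height z + IZR s * (outward y i / rho).
Proof.
  intros Hl Hi. unfold plane_height. rewrite outward_dot_replace_nth by auto.
  replace (coord z i + s - coord z i)%Z with s by lia. field. lra.
Qed.

Lemma plane_height_nbr z w : length z = d -> interior d N z -> In w (torus_nbrs d N z) ->
  plane_height w <= plane_height z + 1.
Proof.
  intros Hl Iz Hw. destruct (in_torus_nbrs_interior d N z w Iz Hw) as [i [s [Hi [Hs ->]]]].
  rewrite plane_height_step by auto. pose proof (outward_bounds i Hi).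
  assert (-1 <= outward y i / rho <= 1).
  { split; apply (Rmult_le_reg_l rho); auto; unfold Rdiv;
      replace (rho * (outward y i * / rho)) with (outward y i) by (field; lra); lra. }
  destruct Hs as [-> | ->]; simpl; lra.
Qed.

Lemma plane_height_mean z : length z = d -> interior d N z ->
  Rsum_list plane_height (torus_nbrs d N z) = 2 * INR d * plane_height z.
Proof.
  intros Hl Iz. rewrite Rsum_torus_nbrs_interior by auto.
  rewrite (Rsum_ext_in _ (fun _ => 2 * plane_height z)); [rewrite Rsum_const, length_seq; ring|].
  intros i Hi. apply in_seq in Hi. rewrite !plane_height_step by (auto; lia). simpl. lra.
Qed.

(* A step along the largest component of [outward] gains height at least [1 / d]. *)
Lemma outward_step_up : length y = d -> interior d N y -> r < rho ->
  exists y', In y' (torus_nbrs d N y) /\ / INR d <= plane_height y'.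
Proof.
  intros Hly Iy Hrr. assert (Hd1 : 1 <= INR d) by (apply (le_INR 1); lia).
  destruct outward_large_coord as [j [Hj Hbig]].
  set (sg := if Rle_dec 0 (outward y j) then 1%Z else (-1)%Z).
  assert (Hsg : (sg = 1 \/ sg = -1)%Z) by (unfold sg; destruct (Rle_dec 0 (outward y j)); auto).
  assert (Hsgv : IZR sg * outward y j = Rabs (outward y j)).
  { unfold sg; destruct (Rle_dec 0 (outward y j)).
    - rewrite Rabs_right by lra. simpl; ring.
    - rewrite Rabs_left by lra. simpl; ring. }
  exists (replace_nth j (coord y j + sg)%Z y).
  split; [apply interior_step_in_torus_nbrs; auto|].
  rewrite plane_height_step by auto. unfold plane_height.
  rewrite outward_dot_self, <- Hrho.
  replace (rho ^ 2 / rho - r + IZR sg * (outward y j / rho))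
    with ((rho - r) + IZR sg * outward y j / rho) by (field; lra). rewrite Hsgv.
  assert (/ INR d <= Rabs (outward y j) / rho); [|lra].
  apply (Rmult_le_reg_l rho); [lra|].
  replace (rho * (Rabs (outward y j) / rho)) with (Rabs (outward y j)) by (field; lra).
  unfold Rdiv in Hbig. lra.
Qed.

Variable h : list Z -> R.
Hypothesis Hh : forall x, In x (grid d N) -> Un_cv (fun n => esc_approx d N gam chi n x) (h x).

(* Comparison with the harmonic function [plane_height / (p + 1)], which is [<= 1] on the
   part of [Delta] adjacent to the region between [B] and [Delta]. *)
Lemma h_ge_plane_height z : length y = d -> In z (grid d N) -> ~ inB d N gam chi z ->
  ~ inDelta d N gam chi z -> plane_height z / (p + 1) <= h z.
Proof.
  intros Hly Hz HzB HzD.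
  set (S := fun z => In z (grid d N) /\ ~ inB d N gam chi z /\ ~ inDelta d N gam chi z).
  set (F := fun z => (1 - ind (inB d N gam chi z)) * (h z - plane_height z / (p + 1))).
  assert (Hd0 : 0 < INR d) by (apply lt_0_INR; lia).
  assert (HSint : forall z, S z -> In z (grid d N) /\ interior d N z)
    by (intros u [Hu [_ HuD]]; split; [|apply notDelta_interior]; auto).
  assert (HF : 0 <= F z); [|unfold F in HF; rewrite ind_false in HF by auto; lra].
  apply (torus_min_principle d N S F Hd HSint); [| |split; auto].
  - intros u w [Hu [_ HuD]] Hw HSw. pose proof (grid_length d N u Hu) as Hlu.
    assert (Hwg : In w (grid d N)) by (eapply torus_nbr_in_grid; eauto).
    unfold F. destruct (classic (inB d N gam chi w)) as [HwB|HwB];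
      [rewrite ind_true by auto; lra|rewrite ind_false by auto].
    assert (HwD : inDelta d N gam chi w) by (apply NNPP; intros HwD; apply HSw; split; auto).
    rewrite (h_Delta d N gam chi h Hh w Hwg HwD).
    pose proof (plane_height_nbr u w Hlu (notDelta_interior u Hu HuD) Hw).
    pose proof (plane_height_notDelta u Hly Hu HuD).
    assert (plane_height w / (p + 1) <= 1); [|lra].
    apply (Rmult_le_reg_l (p + 1)); [lra|]. unfold Rdiv.
    replace ((p + 1) * (plane_height w * / (p + 1))) with (plane_height w) by (field; lra). lra.
  - intros u [Hu [HuB HuD]]. pose proof (grid_length d N u Hu) as Hlu.
    unfold F at 2. rewrite ind_false, (h_mean_value d N gam chi h HN Hh u Hu HuD) by auto.
    set (Sh := Rsum_list (fun a => (1 - ind (inB d N gam chi a)) * h a) (torus_nbrs d N u)).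
    assert (Hsum : Rsum_list F (torus_nbrs d N u) <=
      Sh - / (p + 1) * Rsum_list plane_height (torus_nbrs d N u)).
    { unfold Sh. rewrite <- Rsum_scal, <- Rsum_minus. apply Rsum_le_in. intros v Hv. unfold F.
      destruct (classic (inB d N gam chi v)) as [HvB|HvB].
      - rewrite ind_true by auto. pose proof (plane_height_B v Hly HvB).
        assert (0 < / (p + 1)) by (apply Rinv_0_lt_compat; lra). nra.
      - rewrite ind_false by auto. unfold Rdiv. lra. }
    rewrite (plane_height_mean u Hlu (notDelta_interior u Hu HuD)) in Hsum.
    replace (2 * INR d * ((1 - 0) * (/ (2 * INR d) * Sh - plane_height u / (p + 1))))
      with (Sh - / (p + 1) * (2 * INR d * plane_height u)) by (field; lra).
    auto.
Qed.
End Outward.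

Section LowerBound.
Variable h : list Z -> R.
Hypothesis Hh : forall x, In x (grid d N) -> Un_cv (fun n => esc_approx d N gam chi n x) (h x).

Lemma h_ge_of_notDelta z c : In z (grid d N) -> 0 <= c <= 1 ->
  (~ inDelta d N gam chi z -> c <= h z) -> c <= h z.
Proof.
  intros Hz Hc H. destruct (classic (inDelta d N gam chi z)) as [HD|HD]; auto.
  rewrite (h_Delta d N gam chi h Hh z Hz HD). lra.
Qed.

Lemma h_lower_outside y : In y (grid d N) -> ~ inB d N gam chi y ->
  / (2 * INR d * INR d * (p + 1)) <= h y.
Proof.
  intros Hyg HyB.
  assert (Hd1 : 1 <= INR d) by (apply (le_INR 1); lia).
  apply h_ge_of_notDelta; auto.
  { split; [left; apply Rinv_0_lt_compat|rewrite <- Rinv_1; apply Rinv_le_contravar]; nra. }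
  intros HyD.
  set (rho := sqrt (sqd d (box_proj y) y)).
  assert (Hrho : rho ^ 2 = sqd d (box_proj y) y) by (apply pow2_sqrt, sqd_nonneg).
  assert (Hly : length y = d) by (apply (grid_length d N); auto).
  assert (Hrr : r < rho).
  { apply sqrt_gt_of_sqr_lt; [lra|]. rewrite sqd_box_proj by auto. apply notB_box_sqdist; auto. }
  destruct (outward_step_up y rho Hrho ltac:(lra) Hly (notDelta_interior y Hyg HyD) Hrr)
    as [y' [Hy' Hheight]].
  assert (Hy'g : In y' (grid d N)) by (eapply torus_nbr_in_grid; eauto).
  assert (Hy'B : ~ inB d N gam chi y').
  { intros HB. pose proof (plane_height_B y rho Hrho ltac:(lra) y' Hly HB).
    assert (0 < / INR d) by (apply Rinv_0_lt_compat; lra). lra. }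
  pose proof (h_ge_nbr d N gam chi Hd h HN Hh y y' Hyg HyD Hy' Hy'B) as Hstep.
  assert (Hhy' : / (INR d * (p + 1)) <= h y').
  { apply h_ge_of_notDelta; auto.
    { split; [left; apply Rinv_0_lt_compat|rewrite <- Rinv_1; apply Rinv_le_contravar]; nra. }
    intros Hy'D. eapply Rle_trans; [|apply (h_ge_plane_height y rho Hrho ltac:(lra) h Hh y'); auto].
    rewrite Rinv_mult. unfold Rdiv. apply Rmult_le_compat_r; [left; apply Rinv_0_lt_compat; lra|auto]. }
  eapply Rle_trans; [|apply Hstep].
  replace (/ (2 * INR d * INR d * (p + 1))) with (/ (2 * INR d) * / (INR d * (p + 1)))
    by (field; split; lra).
  apply Rmult_le_compat_l; [left; apply Rinv_0_lt_compat; lra|auto].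
Qed.

Lemma h_lower x : In x (grid d N) -> inBdB d N gam chi x -> / (4 * INR d ^ 3 * (p + 1)) <= h x.
Proof.
  intros Hx [HxB [y [Hy HyB]]].
  assert (Hd1 : 1 <= INR d) by (apply (le_INR 1); lia).
  assert (Hyg : In y (grid d N)) by (eapply torus_nbr_in_grid; eauto).
  pose proof (h_ge_nbr d N gam chi Hd h HN Hh x y Hx (inB_notDelta x HxB) Hy HyB) as Hstep.
  eapply Rle_trans; [|apply Hstep].
  replace (/ (4 * INR d ^ 3 * (p + 1))) with (/ (2 * INR d) * / (2 * INR d * INR d * (p + 1)))
    by (field; split; lra).
  apply Rmult_le_compat_l; [left; apply Rinv_0_lt_compat; lra|]. apply h_lower_outside; auto.
Qed.
End LowerBound.

(** * Upper bound for the escape probability *)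

Definition shrink (c z : list Z) (lam : R) : list Z :=
  map (fun j => (coord c j + Ztrunc (lam * IZR (coord z j - coord c j)))%Z) (seq 0 d).

Lemma coord_shrink c z lam j : (j < d)%nat ->
  IZR (coord (shrink c z lam) j - coord c j) = IZR (Ztrunc (lam * IZR (coord z j - coord c j))).
Proof. intros Hj. unfold shrink. rewrite coord_map_seq by auto. f_equal. ring. Qed.

Lemma shrink_in_grid c z lam : box_point c -> In z (grid d N) -> 0 < lam < 1 ->
  In (shrink c z lam) (grid d N).
Proof.
  intros Hc Hz Hlam. apply grid_spec. split; [unfold shrink; rewrite length_map, length_seq; auto|].
  intros j Hj. apply grid_spec in Hz as [_ Hzc]. specialize (Hzc j Hj).
  pose proof (box_point_coord c j Hc Hj) as Hcj. pose proof lo_pos as Hlo0.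
  assert (HhiN : (hi < Z.of_nat N)%Z).
  { apply lt_IZR. rewrite <- INR_IZR_INZ. pose proof hi_le_N_sub_L as Hh1. pose proof L_eq. fold L in Hh1. lra. }
  pose proof (coord_shrink c z lam j Hj) as Hw.
  destruct (Ztrunc_scale_bounds lam (IZR (coord z j - coord c j)) Hlam) as [_ [_ [B1 B2]]].
  rewrite <- Hw in B1, B2.
  destruct (Rle_dec 0 (IZR (coord z j - coord c j))) as [Hsg|Hsg].
  - destruct (B1 Hsg) as [B1l B1r]. apply le_IZR in B1l, B1r, Hsg. lia.
  - assert (H0' : IZR (coord z j - coord c j) < 0) by lra.
    destruct (B2 H0') as [B2l B2r]. apply le_IZR in B2l, B2r. apply lt_IZR in H0'. lia.
Qed.

Section Shrink.
Variables (c z : list Z) (rho : R).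
Hypothesis Hrho : rho ^ 2 = sqd d c z.
Hypothesis Hrr : r < rho.

Lemma shrink_factor_bounds : 0 < r / rho < 1.
Proof.
  split; [apply Rdiv_lt_0_compat; lra|]. apply (Rmult_lt_reg_l rho); [lra|].
  replace (rho * (r / rho)) with r by (field; lra). lra.
Qed.

Lemma sum_sq_offsets : Rsum_list (fun j => IZR (coord z j - coord c j) ^ 2) (seq 0 d) = rho ^ 2.
Proof. rewrite Hrho. apply Rsum_ext_in. intros. rewrite !minus_IZR. ring. Qed.

Lemma sqd_center_shrink : sqd d c (shrink c z (r / rho)) <= r ^ 2.
Proof.
  pose proof shrink_factor_bounds as Hlam. set (lam := r / rho) in *.
  apply Rle_trans with (Rsum_list (fun j => lam ^ 2 * IZR (coord z j - coord c j) ^ 2) (seq 0 d)).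
  - apply Rsum_le_in. intros j Hj. apply in_seq in Hj.
    replace (IZR (coord c j - coord (shrink c z lam) j))
      with (- IZR (coord (shrink c z lam) j - coord c j)) by (rewrite !minus_IZR; ring).
    rewrite coord_shrink by lia.
    destruct (Ztrunc_scale_bounds lam (IZR (coord z j - coord c j)) Hlam) as [B _].
    simpl in *. lra.
  - rewrite Rsum_scal, sum_sq_offsets. unfold lam. right. field. lra.
Qed.

Lemma sqd_shrink_point : sqd d (shrink c z (r / rho)) z <= (rho - r + INR d) ^ 2.
Proof.
  pose proof shrink_factor_bounds as Hlam. set (lam := r / rho) in *.
  apply Rle_trans with (Rsum_list (fun j => (1 - lam) ^ 2 * IZR (coord z j - coord c j) ^ 2
                                   + (2 * (1 - lam) * rho + 1)) (seq 0 d)).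
  - apply Rsum_le_in. intros j Hj. apply in_seq in Hj.
    replace (IZR (coord (shrink c z lam) j - coord z j)) with
      (- (IZR (coord z j - coord c j) - IZR (coord (shrink c z lam) j - coord c j)))
      by (rewrite !minus_IZR; ring).
    rewrite coord_shrink by lia.
    destruct (Ztrunc_scale_bounds lam (IZR (coord z j - coord c j)) Hlam) as [_ [B _]].
    assert (Rabs (IZR (coord z j - coord c j)) <= rho).
    { apply Rabs_le, sqr_le_bounds; [lra|]. rewrite Hrho.
      replace (IZR (coord z j - coord c j) ^ 2) with (IZR (coord c j - coord z j) ^ 2)
        by (rewrite !minus_IZR; ring). apply sqd_ge_coord; lia. }
    assert (2 * (1 - lam) * Rabs (IZR (coord z j - coord c j)) <= 2 * (1 - lam) * rho)
      by (apply Rmult_le_compat_l; lra).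
    simpl in *. lra.
  - rewrite Rsum_plus, Rsum_scal, Rsum_const, length_seq, sum_sq_offsets.
    assert (E : (1 - lam) * rho = rho - r) by (unfold lam; field; lra).
    assert (Hd1 : 1 <= INR d) by (apply (le_INR 1); lia).
    replace ((1 - lam) ^ 2 * rho ^ 2) with ((rho - r) ^ 2) by (rewrite <- E; ring).
    replace (INR d * (2 * (1 - lam) * rho + 1)) with (INR d * (2 * (rho - r) + 1))
      by (rewrite <- E; ring).
    simpl. nra.
Qed.
End Shrink.

Definition rdist c z := sqrt (sqd d c z).

Lemma rdist_sq c z : rdist c z ^ 2 = sqd d c z.
Proof. apply pow2_sqrt, sqd_nonneg. Qed.

Lemma rdist_nonneg c z : 0 <= rdist c z.
Proof. apply sqrt_pos. Qed.

Lemma offset_sq_le_rdist c z i : (i < d)%nat -> IZR (coord z i - coord c i) ^ 2 <= rdist c z ^ 2.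
Proof.
  intros Hi. rewrite rdist_sq. replace (IZR (coord z i - coord c i) ^ 2)
    with (IZR (coord c i - coord z i) ^ 2) by (rewrite !minus_IZR; ring).
  apply sqd_ge_coord; auto.
Qed.

Lemma rdist_step_sq c z i s : length z = d -> (i < d)%nat ->
  rdist c (replace_nth i (coord z i + s)%Z z) ^ 2 =
  rdist c z ^ 2 + 2 * IZR s * IZR (coord z i - coord c i) + IZR s ^ 2.
Proof. intros Hl Hi. rewrite !rdist_sq, sqd_replace_nth by auto. ring. Qed.

Lemma notB_rdist c z : box_point c -> In z (grid d N) -> ~ inB d N gam chi z -> r < rdist c z.
Proof. intros Hc Hz HB. apply sqrt_gt_of_sqr_lt; [lra|]. apply notB_sqd; auto. Qed.

Lemma Delta_far c z : box_point c -> In z (grid d N) -> ~ inB d N gam chi z ->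
  inDelta d N gam chi z -> p - INR d < rdist c z - r.
Proof.
  intros Hc Hz HzB [_ HD]. destruct (Rlt_le_dec (p - INR d) (rdist c z - r)) as [|Hle]; auto.
  exfalso. apply HD. pose proof (notB_rdist c z Hc Hz HzB) as Hrr.
  exists (shrink c z (r / rdist c z)). split.
  - apply (inB_of_center c); [auto| |apply sqd_center_shrink; auto using rdist_sq].
    apply shrink_in_grid; auto. apply shrink_factor_bounds; auto.
  - apply euclid_le_iff; fold p; [lra|].
    eapply Rle_trans; [apply sqd_shrink_point; auto using rdist_sq|].
    apply pow_incr. assert (1 <= INR d) by (apply (le_INR 1); lia). lra.
Qed.

Lemma rdist_nbr c z w : length z = d -> interior d N z -> In w (torus_nbrs d N z) ->
  rdist c z - 1 <= rdist c w <= rdist c z + 1.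
Proof.
  intros Hl Iz Hw. destruct (in_torus_nbrs_interior d N z w Iz Hw) as [i [s [Hi [Hs ->]]]].
  pose proof (rdist_step_sq c z i s Hl Hi) as E. pose proof (offset_sq_le_rdist c z i Hi) as Hv.
  pose proof (rdist_nonneg c z). pose proof (rdist_nonneg c (replace_nth i (coord z i + s)%Z z)).
  pose proof (sqr_le_bounds _ _ H Hv).
  set (W := rdist c (replace_nth i (coord z i + s)%Z z)) in *.
  set (R0 := rdist c z) in *. set (v := IZR (coord z i - coord c i)) in *.
  assert (E2 : W ^ 2 = R0 ^ 2 + (2 * IZR s * v + 1))
    by (rewrite E; destruct Hs as [-> | ->]; simpl; ring).
  assert (U : W ^ 2 <= (R0 + 1) ^ 2) by (rewrite E2; destruct Hs as [-> | ->]; simpl; lra).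
  assert (Lw : (R0 - 1) ^ 2 <= W ^ 2) by (rewrite E2; destruct Hs as [-> | ->]; simpl; lra).
  split.
  - destruct (Rle_dec (R0 - 1) 0); [lra|]. pose proof (sqr_le_bounds (R0 - 1) W ltac:(lra) Lw). lra.
  - pose proof (sqr_le_bounds W (R0 + 1) ltac:(lra) U). lra.
Qed.

Section UpperBound.
Hypothesis Hmargin : INR d + 2 <= p.
Hypothesis Hrbig : 4 * INR d * (p + 2) <= r.

(* Radial profile of the supersolution in the distance [u] beyond [B]: [phi >= 1] around
   [phi_T], beyond which every point of [Delta] lies, and the concavity [phi_b] absorbs the
   curvature term [d phi_a / r] of the spheres around a box point. *)
Definition phi_T := p - INR d.
Definition phi_a := 2 / phi_T.
Definition phi_b := 2 * phi_a * INR d / r.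
Definition phi u := phi_a * (u + 1) - phi_b * (u + 1) ^ 2.
Definition supersol c z :=
  if Rle_dec phi_T (rdist c z - r) then 1 else Rmin 1 (phi (rdist c z - r)).

Lemma supersol_constants : 2 <= phi_T /\ 0 < phi_a /\ 0 < phi_b /\
  2 * phi_b * (phi_T + 2) <= phi_a /\ INR d * phi_a / r = phi_b / 2 /\ 1 <= r.
Proof.
  assert (Hd1 : 1 <= INR d) by (apply (le_INR 1); lia).
  assert (HT : 2 <= phi_T) by (unfold phi_T; lra).
  assert (Ha : 0 < phi_a) by (unfold phi_a; apply Rdiv_lt_0_compat; lra).
  assert (Hr4 : 4 * INR d * (phi_T + 2) <= r).
  { unfold phi_T. apply Rle_trans with (4 * INR d * (p + 2)); auto. apply Rmult_le_compat_l; lra. }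
  assert (Hr1 : 1 <= r) by nra.
  repeat split; auto.
  - unfold phi_b. apply Rdiv_lt_0_compat; [apply Rmult_lt_0_compat|]; lra.
  - replace (2 * phi_b * (phi_T + 2)) with (phi_a * (4 * INR d * (phi_T + 2)) / r)
      by (unfold phi_b; field; lra).
    apply (Rmult_le_reg_r r); [lra|]. unfold Rdiv.
    rewrite Rmult_assoc, Rinv_l, Rmult_1_r by lra. apply Rmult_le_compat_l; lra.
  - unfold phi_b. field. lra.
Qed.

Lemma phi_nonneg u : -1 <= u <= phi_T + 1 -> 0 <= phi u.
Proof.
  intros Hu. destruct supersol_constants as [H1 [H2 [H3 [H4 _]]]]. unfold phi.
  replace (phi_a * (u + 1) - phi_b * (u + 1) ^ 2) with ((u + 1) * (phi_a - phi_b * (u + 1)))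
    by ring.
  assert (phi_b * (u + 1) <= phi_b * (phi_T + 2)) by (apply Rmult_le_compat_l; lra).
  apply Rmult_le_pos; lra.
Qed.

Lemma phi_ge_1 u : phi_T <= u <= phi_T + 1 -> 1 <= phi u.
Proof.
  intros Hu. destruct supersol_constants as [H1 [H2 [H3 [H4 _]]]]. unfold phi.
  replace (phi_a * (u + 1) - phi_b * (u + 1) ^ 2) with ((u + 1) * (phi_a - phi_b * (u + 1)))
    by ring.
  assert (phi_b * (u + 1) <= phi_b * (phi_T + 2)) by (apply Rmult_le_compat_l; lra).
  assert ((phi_T + 1) * (phi_a / 2) <= (u + 1) * (phi_a - phi_b * (u + 1)))
    by (apply Rmult_le_compat; lra).
  assert ((phi_T + 1) * (phi_a / 2) = 1 + 1 / phi_T) by (unfold phi_a; field; lra).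
  assert (0 < 1 / phi_T) by (apply Rdiv_lt_0_compat; lra). lra.
Qed.

Lemma phi_le u : -1 <= u -> phi u <= phi_a * (u + 1).
Proof.
  intros Hu. destruct supersol_constants as [_ [_ [H3 _]]]. unfold phi.
  assert (0 <= phi_b * (u + 1) ^ 2) by (apply Rmult_le_pos; [lra|apply pow2_ge_0]). lra.
Qed.

Lemma phi_superharmonic c z : length z = d -> interior d N z -> r < rdist c z ->
  rdist c z - r < phi_T ->
  Rsum_list (fun w => phi (rdist c w - r)) (torus_nbrs d N z) <= 2 * INR d * phi (rdist c z - r).
Proof.
  intros Hl Iz Hr1 HT1. destruct supersol_constants as [HT2 [Ha [Hb [Hab [Hdab Hr1']]]]].
  set (rho := rdist c z) in *.
  set (A := phi_a - 2 * phi_b * (rho - r + 1)).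
  assert (HA : 0 <= A <= phi_a).
  { unfold A. assert (0 <= phi_b * (rho - r + 1)) by (apply Rmult_le_pos; lra).
    assert (phi_b * (rho - r + 1) <= phi_b * (phi_T + 2)) by (apply Rmult_le_compat_l; lra). lra. }
  assert (Hphi : forall u, phi (u - r) = phi (rho - r) + (A * (u - rho) - phi_b * (u - rho) ^ 2))
    by (intros; unfold phi, A; ring).
  rewrite Rsum_torus_nbrs_interior by auto.
  apply Rle_trans with (Rsum_list (fun i => 2 * phi (rho - r) +
      (A / rho - 8 * phi_b * IZR (coord z i - coord c i) ^ 2 / (9 * rho ^ 2))) (seq 0 d)).
  - apply Rsum_le_in. intros i Hi. apply in_seq in Hi.
    rewrite (Hphi (rdist c (replace_nth i (coord z i + 1)%Z z))),
            (Hphi (rdist c (replace_nth i (coord z i + -1)%Z z))).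
    assert (Hi' : (i < d)%nat) by lia.
    assert (Ep := rdist_step_sq c z i 1 Hl Hi'). assert (Em := rdist_step_sq c z i (-1) Hl Hi').
    pose proof (offset_sq_le_rdist c z i Hi') as Hv. fold rho in Ep, Em, Hv.
    replace (rho ^ 2 + 2 * IZR 1 * IZR (coord z i - coord c i) + IZR 1 ^ 2)
      with (rho ^ 2 + 2 * IZR (coord z i - coord c i) + 1) in Ep by ring.
    replace (rho ^ 2 + 2 * IZR (-1) * IZR (coord z i - coord c i) + IZR (-1) ^ 2)
      with (rho ^ 2 - 2 * IZR (coord z i - coord c i) + 1) in Em by ring.
    pose proof (quadratic_pair_bound rho _ _ _ A phi_b ltac:(lra) Hv (rdist_nonneg _ _)
       (rdist_nonneg _ _) Ep Em (proj1 HA) ltac:(lra)).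
    lra.
  - rewrite Rsum_plus, Rsum_const, length_seq.
    rewrite (Rsum_ext_in _ (fun i => A / rho + - (8 * phi_b / (9 * rho ^ 2)) *
                                     IZR (coord c i - coord z i) ^ 2))
      by (intros; rewrite !minus_IZR; field; lra).
    rewrite Rsum_plus, Rsum_const, Rsum_scal, length_seq. fold (sqd d c z). rewrite <- rdist_sq.
    fold rho. replace (- (8 * phi_b / (9 * rho ^ 2)) * rho ^ 2) with (- (8 * phi_b / 9))
      by (field; lra).
    assert (INR d * (A / rho) <= phi_b / 2).
    { rewrite <- Hdab. unfold Rdiv. pose proof (pos_INR d). rewrite Rmult_assoc.
      apply Rmult_le_compat_l; [auto|]. apply Rmult_le_compat; [lra| |lra|].
      - left; apply Rinv_0_lt_compat; lra.
      - apply Rinv_le_contravar; lra. }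
    lra.
Qed.

Lemma supersol_bounds c z : box_point c -> In z (grid d N) -> ~ inB d N gam chi z ->
  0 <= supersol c z <= 1.
Proof.
  intros Hc Hz HB. pose proof (notB_rdist c z Hc Hz HB). unfold supersol.
  destruct (Rle_dec phi_T (rdist c z - r)); [lra|].
  pose proof (phi_nonneg (rdist c z - r) ltac:(lra)).
  split; [apply Rmin_glb; lra|apply Rmin_l].
Qed.

Lemma supersol_Delta c z : box_point c -> In z (grid d N) -> ~ inB d N gam chi z ->
  inDelta d N gam chi z -> supersol c z = 1.
Proof.
  intros Hc Hz HB HD. pose proof (Delta_far c z Hc Hz HB HD).
  unfold supersol. destruct (Rle_dec phi_T (rdist c z - r)); auto. unfold phi_T in n. lra.
Qed.

Lemma supersol_mean c z : box_point c -> In z (grid d N) -> ~ inB d N gam chi z ->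
  ~ inDelta d N gam chi z ->
  / (2 * INR d) * Rsum_list (fun w => (1 - ind (inB d N gam chi w)) * supersol c w)
                            (torus_nbrs d N z) <= supersol c z.
Proof.
  intros Hc Hz HB HD.
  assert (Hd0 : 0 < INR d) by (apply lt_0_INR; lia).
  pose proof (notDelta_interior z Hz HD) as Iz. pose proof (grid_length d N z Hz) as Hl.
  pose proof (notB_rdist c z Hc Hz HB) as Hrz.
  assert (Hle1 := mean_nbrs_bounds d N gam chi Hd (supersol c) z
    ltac:(intros w Hw HwB; apply supersol_bounds; eauto using torus_nbr_in_grid)).
  unfold supersol at 2. destruct (Rle_dec phi_T (rdist c z - r)) as [|HT1]; [lra|].
  apply Rmin_glb; [lra|].
  assert (Hterm : Rsum_list (fun w => (1 - ind (inB d N gam chi w)) * supersol c w) (torus_nbrs d N z)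
                  <= Rsum_list (fun w => phi (rdist c w - r)) (torus_nbrs d N z)).
  { apply Rsum_le_in. intros w Hw. assert (Hwg : In w (grid d N)) by eauto using torus_nbr_in_grid.
    pose proof (rdist_nbr c z w Hl Iz Hw) as Hrw.
    destruct (classic (inB d N gam chi w)) as [HwB|HwB].
    - rewrite ind_true, Rminus_diag, Rmult_0_l by auto. apply phi_nonneg. lra.
    - rewrite ind_false, Rminus_0_r, Rmult_1_l by auto. unfold supersol.
      pose proof (notB_rdist c w Hc Hwg HwB).
      destruct (Rle_dec phi_T (rdist c w - r)); [apply phi_ge_1; lra|apply Rmin_r]. }
  pose proof (phi_superharmonic c z Hl Iz Hrz ltac:(lra)).
  apply (Rmult_le_reg_l (2 * INR d)); [lra|]. rewrite <- Rmult_assoc, Rinv_r by lra. lra.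
Qed.

Lemma esc_approx_le_supersol c n z : box_point c -> In z (grid d N) -> ~ inB d N gam chi z ->
  esc_approx d N gam chi n z <= supersol c z.
Proof.
  intros Hc. revert z. induction n as [|n IH]; intros z Hz HB;
    destruct (classic (inDelta d N gam chi z)) as [HD|HD];
    try (rewrite esc_approx_Delta, supersol_Delta by auto; lra).
  - rewrite esc_approx_0 by auto. apply supersol_bounds; auto.
  - rewrite esc_approx_S by auto. eapply Rle_trans; [|apply supersol_mean; auto].
    assert (0 < INR d) by (apply lt_0_INR; lia).
    apply Rmult_le_compat_l; [left; apply Rinv_0_lt_compat; lra|].
    apply Rsum_le_in. intros w Hw. assert (Hwg : In w (grid d N)) by eauto using torus_nbr_in_grid.
    destruct (classic (inB d N gam chi w)) as [HwB|HwB].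
    + rewrite ind_true by auto. lra.
    + rewrite ind_false by auto. apply Rmult_le_compat_l; [lra|]. apply IH; auto.
Qed.

Variable h : list Z -> R.
Hypothesis Hh : forall x, In x (grid d N) -> Un_cv (fun n => esc_approx d N gam chi n x) (h x).

(* A boundary point [x] is within [r] of its nearest box point, so its neighbours are within
   [r + 1], where the supersolution is at most [2 phi_a]. *)
Lemma h_upper x : In x (grid d N) -> inBdB d N gam chi x -> h x <= 2 * phi_a.
Proof.
  intros Hx [HxB _]. pose proof (grid_length d N x Hx) as Hl.
  set (c := box_proj x). assert (Hc : box_point c) by (apply box_point_proj; auto).
  assert (Hd0 : 0 < INR d) by (apply lt_0_INR; lia).
  destruct supersol_constants as [HT2 [Ha _]].
  assert (Hrx : rdist c x <= r).
  { apply inB_iff in HxB as [_ HB]. unfold rdist. rewrite <- (sqrt_pow2 r) by lra.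
    apply sqrt_le_1_alt. unfold c. rewrite sqd_box_proj; auto. }
  pose proof (inB_notDelta x HxB) as HxD. pose proof (inB_interior x HxB) as Ix.
  apply (Un_cv_le_ub_S _ _ _ (Hh x Hx)). intros n. rewrite esc_approx_S by auto.
  apply (Rmult_le_reg_l (2 * INR d)); [lra|]. rewrite <- Rmult_assoc, Rinv_r, Rmult_1_l by lra.
  replace (2 * INR d * (2 * phi_a)) with (INR (length (torus_nbrs d N x)) * (2 * phi_a))
    by (rewrite length_torus_nbrs, mult_INR; simpl; ring).
  rewrite <- Rsum_const. apply Rsum_le_in. intros w Hw.
  assert (Hwg : In w (grid d N)) by eauto using torus_nbr_in_grid.
  destruct (classic (inB d N gam chi w)) as [HwB|HwB]; [rewrite ind_true by auto; lra|].
  rewrite ind_false, Rminus_0_r, Rmult_1_l by auto.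
  pose proof (esc_approx_le_supersol c n w Hc Hwg HwB) as Hsup.
  pose proof (rdist_nbr c x w Hl Ix Hw). pose proof (notB_rdist c w Hc Hwg HwB).
  unfold supersol in Hsup. destruct (Rle_dec phi_T (rdist c w - r)); [lra|].
  pose proof (Rmin_r 1 (phi (rdist c w - r))). pose proof (phi_le (rdist c w - r) ltac:(lra)).
  assert (phi_a * (rdist c w - r + 1) <= phi_a * 2) by (apply Rmult_le_compat_l; lra). lra.
Qed.
End UpperBound.

End Box.

(** * Capacity and equilibrium measure *)

Lemma exp_le_compat x y : x <= y -> exp x <= exp y.
Proof. intros [H|H]; [left; apply exp_increasing; auto|right; subst; auto]. Qed.

Lemma ln_le_compat x y : 0 < x -> x <= y -> ln x <= ln y.
Proof. intros Hx [H|H]; [left; apply ln_increasing; auto|right; subst; auto]. Qed.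

Lemma Rpower_sublinear_eventually (gam K eps : R) : 0 < gam < 1 -> 0 < K -> 0 < eps ->
  exists N0 : nat, forall N, (N0 <= N)%nat ->
    (0 < N)%nat /\ K <= Rpower (INR N) gam /\ Rpower (INR N) gam <= eps * INR N.
Proof.
  intros Hg HK He.
  set (M := Rmax (ln K / gam) (- ln eps / (1 - gam))).
  destruct (archimed (exp M)) as [H1 _].
  assert (Hpos : (0 < up (exp M))%Z) by (apply lt_IZR; pose proof (exp_pos M); lra).
  exists (Z.to_nat (up (exp M))). intros N HN.
  assert (HN0 : exp M <= INR N).
  { apply Rle_trans with (INR (Z.to_nat (up (exp M)))); [|apply le_INR; auto].
    rewrite INR_IZR_INZ, Z2Nat.id by lia. lra. }
  assert (HNp : 0 < INR N) by (pose proof (exp_pos M); lra).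
  assert (HlnN : M <= ln (INR N)) by (rewrite <- (ln_exp M); apply ln_le_compat; auto; apply exp_pos).
  assert (HM1 : ln K / gam <= M) by apply Rmax_l.
  assert (HM2 : - ln eps / (1 - gam) <= M) by apply Rmax_r.
  split; [apply INR_lt; simpl; lra|]. unfold Rpower. split.
  - rewrite <- (exp_ln K) at 1 by auto. apply exp_le_compat.
    apply Rle_trans with (gam * (ln K / gam)); [right; field; lra|]. apply Rmult_le_compat_l; lra.
  - rewrite <- (exp_ln eps) by auto. rewrite <- (exp_ln (INR N)) at 2 by auto.
    rewrite <- exp_plus. apply exp_le_compat.
    assert (- ln eps <= (1 - gam) * ln (INR N)); [|lra].
    apply Rle_trans with ((1 - gam) * (- ln eps / (1 - gam))); [right; field; lra|].
    apply Rmult_le_compat_l; lra.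
Qed.

Lemma floor_spec x : exists z : Z, forall c : Z, IZR c <= x <-> (c <= z)%Z.
Proof.
  destruct (base_Int_part x) as [H1 H2]. exists (Int_part x). intros c. split; intros H.
  - apply Z.lt_succ_r, lt_IZR. rewrite succ_IZR. lra.
  - apply IZR_le in H. lra.
Qed.

Lemma ceil_spec x : exists z : Z, forall c : Z, x <= IZR c <-> (z <= c)%Z.
Proof.
  destruct (floor_spec (- x)) as [z Hz]. exists (- z)%Z. intros c.
  specialize (Hz (- c)%Z). rewrite opp_IZR in Hz. split; intros H.
  - assert (- c <= z)%Z by (apply Hz; lra). lia.
  - assert (IZR (- c) <= - x) by (rewrite opp_IZR; apply Hz; lia). rewrite opp_IZR in H0. lra.
Qed.

Definition bd_count d N gam chi := Rsum_list (fun x => ind (inBdB d N gam chi x)) (grid d N).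

Lemma capD_between d N gam chi h hl hu :
  (forall x, In x (grid d N) -> inBdB d N gam chi x -> hl <= h x <= hu) ->
  hl * bd_count d N gam chi <= capD d N gam chi h <= hu * bd_count d N gam chi.
Proof.
  intros Hb. unfold bd_count, capD. rewrite <- !Rsum_scal.
  split; apply Rsum_le_in; intros x Hx;
    (destruct (classic (inBdB d N gam chi x)) as [HB|HB];
     [rewrite !ind_true by auto; specialize (Hb x Hx HB); lra
     |rewrite !ind_false by auto; lra]).
Qed.

Lemma integer_box_exists N gam chi : 0 < chi < / 4 -> 1 <= Rpower (INR N) gam ->
  48 * Rpower (INR N) gam <= chi * INR N ->
  exists lo hi : Z, (forall c : Z, Lpar N gam chi <= IZR c <-> (lo <= c)%Z) /\
    (forall c : Z, IZR c <= INR N - Lpar N gam chi <-> (c <= hi)%Z) /\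
    (lo <= hi)%Z /\ INR N / 4 <= IZR (hi - lo + 1).
Proof.
  intros Hchi Hp1 Hp2.
  assert (HL : Lpar N gam chi = 2 * Rpower (INR N) gam + chi * INR N) by reflexivity.
  destruct (ceil_spec (Lpar N gam chi)) as [lo Hlo].
  destruct (floor_spec (INR N - Lpar N gam chi)) as [hi Hhi].
  assert (Hlo1 : IZR lo < Lpar N gam chi + 1).
  { destruct (Rlt_le_dec (IZR lo) (Lpar N gam chi + 1)) as [|H]; auto.
    assert (lo <= lo - 1)%Z by (apply Hlo; rewrite minus_IZR; lra). lia. }
  assert (Hhi1 : INR N - Lpar N gam chi < IZR hi + 1).
  { destruct (Rlt_le_dec (INR N - Lpar N gam chi) (IZR hi + 1)) as [|H]; auto.
    assert (hi + 1 <= hi)%Z by (apply Hhi; rewrite plus_IZR; lra). lia. }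
  assert (Hwidth : INR N / 4 <= IZR (hi - lo + 1)).
  { rewrite plus_IZR, minus_IZR. assert (chi * INR N <= INR N / 4) by nra. lra. }
  exists lo, hi. split; [exact Hlo|split; [exact Hhi|split; [|exact Hwidth]]].
  assert (0 < INR N / 4) by (pose proof (pos_INR N); nra).
  rewrite plus_IZR, minus_IZR in Hwidth.
  assert (IZR lo < IZR (hi + 1)) by (rewrite plus_IZR; lra).
  apply lt_IZR in H0. lia.
Qed.

Lemma boundary_estimates d N gam chi h :
  (3 <= d)%nat -> 0 < chi < / 4 -> (0 < N)%nat ->
  2 * INR d + 4 <= Rpower (INR N) gam <= chi / (16 * INR d) * INR N ->
  (forall x, In x (grid d N) -> Un_cv (fun n => esc_approx d N gam chi n x) (h x)) ->
  (INR N / 4) ^ (d - 1) <= bd_count d N gam chi <= 2 * INR d * INR N ^ (d - 1) /\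
  forall x, In x (grid d N) -> inBdB d N gam chi x ->
    / (8 * INR d ^ 3 * Rpower (INR N) gam) <= h x <= 8 / Rpower (INR N) gam.
Proof.
  intros Hd3 Hchi HN [Hp1 Hp2] Hh.
  set (p := Rpower (INR N) gam) in *. set (r := chi * INR N).
  assert (HD : 3 <= INR d) by (replace 3 with (INR 3) by (simpl; ring); apply le_INR; auto).
  assert (Hd0 : (0 < d)%nat) by lia.
  assert (H16 : 16 * INR d * p <= r).
  { unfold r. apply Rle_trans with (16 * INR d * (chi / (16 * INR d) * INR N)).
    - apply Rmult_le_compat_l; lra.
    - right. field. lra. }
  assert (Hp : 2 < p) by lra. assert (Hr : 0 < r) by nra. assert (H48 : 48 * p <= r) by nra.
  destruct (integer_box_exists N gam chi Hchi ltac:(fold p; lra) H48)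
    as [lo [hi [Hlo [Hhi [Hlohi Hwidth]]]]].
  split; [split|].
  - eapply Rle_trans; [|apply (count_inBdB_lower d N gam chi lo hi Hd0 HN Hr Hp Hlo Hhi Hlohi)].
    apply pow_incr. pose proof (pos_INR N). lra.
  - apply (count_inBdB_upper d N gam chi lo hi Hd0 HN Hr Hp Hlo Hhi Hlohi).
  - intros x Hx Hb. split.
    + eapply Rle_trans; [|apply (h_lower d N gam chi lo hi Hd0 HN Hr Hp Hlo Hhi Hlohi h Hh x Hx Hb)].
      fold p. assert (0 < INR d ^ 3) by (apply pow_lt; lra).
      apply Rinv_le_contravar; nra.
    + eapply Rle_trans.
      { apply (h_upper d N gam chi lo hi Hd0 HN Hr Hp Hlo Hhi Hlohi); fold p r; auto; nra. }
      unfold phi_a, phi_T. fold p. apply (Rmult_le_reg_l (p * (p - INR d))); [nra|].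
      unfold Rdiv. replace (p * (p - INR d) * (2 * (2 * / (p - INR d)))) with (4 * p) by (field; lra).
      replace (p * (p - INR d) * (8 * / p)) with (8 * (p - INR d)) by (field; lra). lra.
Qed.

Lemma cap_sandwich (D F p Q K cap : R) :
  3 <= D -> 1 <= F -> 0 < p -> 0 < Q ->
  Q / F <= K <= 2 * D * Q ->
  / (8 * D ^ 3 * p) * K <= cap <= 8 / p * K ->
  Q / p / (8 * D ^ 3 * F) <= cap <= 16 * D * (Q / p).
Proof.
  intros HD HF Hp HQ [HK1 HK2] [Hc1 Hc2].
  assert (HD3 : 27 <= D ^ 3) by (simpl; nra).
  split.
  - eapply Rle_trans; [|apply Hc1].
    replace (Q / p / (8 * D ^ 3 * F)) with (/ (8 * D ^ 3 * p) * (Q / F)) by (field; repeat split; lra).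
    apply Rmult_le_compat_l; auto. left; apply Rinv_0_lt_compat; nra.
  - eapply Rle_trans; [apply Hc2|]. replace (16 * D * (Q / p)) with (8 / p * (2 * D * Q))
      by (field; lra). apply Rmult_le_compat_l; auto. left; apply Rdiv_lt_0_compat; lra.
Qed.

Lemma cap_ebar_scaling (D F p Q K cap : R) :
  3 <= D -> 1 <= F -> 0 < p -> 0 < Q ->
  Q / F <= K <= 2 * D * Q ->
  / (8 * D ^ 3 * p) * K <= cap <= 8 / p * K ->
  let c := / (512 * F * D ^ 4) in
  (c * (Q / p) <= cap <= / c * (Q / p)) /\
  forall hx, / (8 * D ^ 3 * p) <= hx <= 8 / p -> c * / Q <= hx / cap <= / c * / Q.
Proof.
  intros HD HF Hp HQ HK Hc c.
  destruct (cap_sandwich D F p Q K cap HD HF Hp HQ HK Hc) as [HcapLo HcapHi].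
  assert (HD3 : 27 <= D ^ 3) by (simpl; nra).
  assert (HDF : 27 <= D ^ 3 * F) by nra.
  assert (Hinvc : / c = 512 * F * D ^ 4) by (unfold c; rewrite Rinv_inv; auto).
  assert (Hc512 : / c = 64 * D * (8 * D ^ 3 * F)) by (rewrite Hinvc; ring).
  assert (Hcpos : 0 < c) by (unfold c; apply Rinv_0_lt_compat; nra).
  set (X := Q / p) in *. assert (HX : 0 < X) by (apply Rdiv_lt_0_compat; auto).
  assert (Hcap : 0 < cap) by (eapply Rlt_le_trans; [|apply HcapLo]; apply Rdiv_lt_0_compat; nra).
  split; [split|].
  - eapply Rle_trans; [|apply HcapLo]. unfold Rdiv. rewrite (Rmult_comm c).
    apply Rmult_le_compat_l; [lra|]. rewrite <- (Rinv_inv c). apply Rinv_le_contravar; nra.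
  - eapply Rle_trans; [apply HcapHi|]. rewrite Hc512. nra.
  - intros hx [Hh1 Hh2]. split.
    + apply Rle_trans with (/ (8 * D ^ 3 * p) / (16 * D * X)).
      * replace (/ (8 * D ^ 3 * p) / (16 * D * X)) with (/ (128 * D ^ 4) * / Q)
          by (unfold X; field; repeat split; lra).
        apply Rmult_le_compat_r; [left; apply Rinv_0_lt_compat; auto|].
        rewrite <- (Rinv_inv c). apply Rinv_le_contravar; [nra|]. rewrite Hinvc. nra.
      * unfold Rdiv. apply Rmult_le_compat; auto; try (left; apply Rinv_0_lt_compat; nra).
        apply Rinv_le_contravar; auto.
    + apply Rle_trans with (8 / p / (X / (8 * D ^ 3 * F))).
      * unfold Rdiv. apply Rmult_le_compat; auto.
        -- assert (0 < / (8 * D ^ 3 * p)) by (apply Rinv_0_lt_compat; nra). lra.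
        -- left; apply Rinv_0_lt_compat; auto.
        -- apply Rinv_le_contravar; auto. apply Rdiv_lt_0_compat; nra.
      * replace (8 / p / (X / (8 * D ^ 3 * F))) with (64 * D ^ 3 * F * / Q)
          by (unfold X; field; repeat split; lra).
        rewrite Hc512. apply Rmult_le_compat_r; [left; apply Rinv_0_lt_compat; auto|]. nra.
Qed.

Lemma Rpower_capacity_exponent (x : R) (d : nat) (gam : R) : 0 < x -> (1 <= d)%nat ->
  Rpower x (INR d - 1 - gam) = x ^ (d - 1) / Rpower x gam.
Proof.
  intros Hx Hd. replace (INR d - 1 - gam) with (INR (d - 1) + - gam)
    by (rewrite minus_INR by auto; simpl; ring).
  rewrite Rpower_plus, Rpower_pow, Rpower_Ropp by auto. reflexivity.
Qed.

Lemma Rpower_measure_exponent (x : R) (d : nat) : 0 < x -> (1 <= d)%nat ->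
  Rpower x (1 - INR d) = / x ^ (d - 1).
Proof.
  intros Hx Hd. replace (1 - INR d) with (- INR (d - 1)) by (rewrite minus_INR by auto; simpl; ring).
  rewrite Rpower_Ropp, Rpower_pow by auto. reflexivity.
Qed.

Theorem lemma5p1 (d : nat) (gam chi : R) :
  (3 <= d)%nat ->
  / (INR d - 1) < gam < 1 ->
  0 < chi < / 4 ->
  exists c : R, 0 < c < 1 /\
  exists N0 : nat, forall N : nat, (N0 <= N)%nat ->
  forall h : list Z -> R,
    (forall x, In x (grid d N) ->
       Un_cv (fun n => esc_approx d N gam chi n x) (h x)) ->
    (c * Rpower (INR N) (INR d - 1 - gam) <= capD d N gam chi h
     <= / c * Rpower (INR N) (INR d - 1 - gam)) /\
    (forall x, In x (grid d N) -> inBdB d N gam chi x ->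
       c * Rpower (INR N) (1 - INR d) <= ebarD d N gam chi h x
       <= / c * Rpower (INR N) (1 - INR d)).
Proof.
  intros Hd3 Hgam Hchi.
  assert (HD : 3 <= INR d) by (replace 3 with (INR 3) by (simpl; ring); apply le_INR; auto).
  assert (HF : 1 <= 4 ^ (d - 1)) by (apply pow_R1_Rle; lra).
  assert (Hgam0 : 0 < gam).
  { apply Rlt_trans with (/ (INR d - 1)); [apply Rinv_0_lt_compat; lra|apply Hgam]. }
  exists (/ (512 * 4 ^ (d - 1) * INR d ^ 4)). split.
  { assert (81 <= INR d ^ 4) by (replace 81 with (3 ^ 4) by ring; apply pow_incr; lra).
    assert (1 < 512 * 4 ^ (d - 1) * INR d ^ 4) by nra.
    split; [apply Rinv_0_lt_compat; lra|rewrite <- Rinv_1; apply Rinv_lt_contravar; nra]. }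
  destruct (Rpower_sublinear_eventually gam (2 * INR d + 4) (chi / (16 * INR d))
    ltac:(lra) ltac:(lra) ltac:(apply Rdiv_lt_0_compat; lra)) as [N0 HN0].
  exists N0. intros N HN h Hh. destruct (HN0 N HN) as [HNpos Hp].
  assert (HNr : 0 < INR N) by (apply lt_0_INR; auto).
  destruct (boundary_estimates d N gam chi h Hd3 Hchi HNpos Hp Hh) as [HK Hhx].
  assert (HKN : INR N ^ (d - 1) / 4 ^ (d - 1) <= bd_count d N gam chi).
  { unfold Rdiv. rewrite <- pow_inv, <- Rpow_mult_distr. apply HK. }
  destruct (cap_ebar_scaling (INR d) (4 ^ (d - 1)) (Rpower (INR N) gam) (INR N ^ (d - 1))
    (bd_count d N gam chi) (capD d N gam chi h) HD HF ltac:(lra) ltac:(apply pow_lt; lra)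
    (conj HKN (proj2 HK)) (capD_between d N gam chi h _ _ Hhx)) as [Hcap Hebar].
  rewrite Rpower_capacity_exponent, Rpower_measure_exponent by (auto; lia).
  split; [exact Hcap|]. intros x Hx Hb.
  unfold ebarD. rewrite ind_true, Rmult_1_l by auto. apply Hebar, Hhx; auto.
Qed.
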